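(* Fix $\rho<1$. There exist constants $K,c>0$ (depending only on $\rho$) such that the following holds for all sufficiently large integers $t$. Let $n$ be an integer with $Kt/\log t\leq n\leq Kt/\log t+2$ and let $H$ be any $3$-regular graph on $n$ vertices whose transition matrix has all eigenvalues other than $1$ of absolute value at most $\rho$. Let $G_t$ be the graph obtained from the half-line $\mathbb{N}=\{0,1,2,\ldots\}$ (edges between consecutive integers) by adding a copy of $H$ and a single edge joining $0$ to some vertex of $H$ (so that $0$ has degree $2$). Then simple random walk on $G_t$ satisfies $$\mathbb{P}_0(\tau_0=t\mid\tau_0\geq t)\geq\frac{c\log t}{t}.$$
   Context: $\tau_0=\min\{s\geq1:X_s=0\}$ for simple random walk $(X_s)$ on $G_t$ started at $0$. *)

From Stdlib Require Import Reals List Arith.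
Import ListNotations.
Open Scope R_scope.

Definition rsum (l : list R) : R := fold_right Rplus 0 l.

Definition sum_lt (n : nat) (f : nat -> R) : R := rsum (map f (seq 0 n)).

(* A finite simple graph H on vertex set {0,..,n-1}, given by a boolean
   adjacency relation (values outside {0,..,n-1} are irrelevant). *)
Definition nbrsH (n : nat) (adj : nat -> nat -> bool) (i : nat) : list nat :=
  filter (adj i) (seq 0 n).

Definition cubic_graph (n : nat) (adj : nat -> nat -> bool) : Prop :=
  (forall i j, (i < n)%nat -> (j < n)%nat -> adj i j = adj j i) /\
  (forall i, (i < n)%nat -> adj i i = false) /\
  (forall i, (i < n)%nat -> length (nbrsH n adj i) = 3%nat).

Definition transH (adj : nat -> nat -> bool) (i j : nat) : R :=
  (if adj i j then 1 else 0) / 3.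

(* All eigenvalues of the transition matrix other than the trivial eigenvalue 1
   (counted with multiplicity) have absolute value at most rho.  Since the
   transition matrix is real symmetric with the constant vector as eigenvector
   for 1, the non-trivial eigenvalues are exactly the eigenvalues of its
   restriction to the orthogonal complement of the constant vector. *)
Definition nontrivial_spectrum_bound (n : nat) (adj : nat -> nat -> bool) (rho : R) : Prop :=
  forall (lam : R) (v : nat -> R),
    (exists i, (i < n)%nat /\ v i <> 0) ->
    sum_lt n v = 0 ->
    (forall i, (i < n)%nat -> sum_lt n (fun j => transH adj i j * v j) = lam * v i) ->
    Rabs lam <= rho.

Inductive vtx : Type := Lv (k : nat) | Hv (i : nat).

Definition nbrsG (n : nat) (adj : nat -> nat -> bool) (v0 : nat) (x : vtx) : list vtx :=
  match x with
  | Lv 0 => [Lv 1; Hv v0]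
  | Lv (S k) => [Lv k; Lv (S (S k))]
  | Hv i => map Hv (nbrsH n adj i) ++ (if Nat.eqb i v0 then [Lv 0] else [])
  end.

Definition degG n adj v0 (x : vtx) : R := INR (length (nbrsG n adj v0 x)).

(* first_hit n adj v0 s x = P_x(tau_0 = s) for simple random walk on G_t,
   where tau_0 = min{s >= 1 : X_s = 0}. *)
Fixpoint first_hit (n : nat) (adj : nat -> nat -> bool) (v0 : nat) (s : nat) (x : vtx) : R :=
  match s with
  | O => 0
  | S s' =>
      rsum (map (fun y =>
                   / degG n adj v0 x *
                   match y with
                   | Lv 0 => match s' with O => 1 | S _ => 0 end
                   | _ => first_hit n adj v0 s' y
                   end)
                (nbrsG n adj v0 x))
  end.

Definition ret_eq n adj v0 (t : nat) : R := first_hit n adj v0 t (Lv 0).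

(* P_0(tau_0 >= t) = 1 - sum_{s=1}^{t-1} P_0(tau_0 = s) *)
Definition ret_ge n adj v0 (t : nat) : R :=
  1 - rsum (map (fun s => ret_eq n adj v0 s) (seq 1 (t - 1))).

From Stdlib Require Import Reals List Arith Lia Lra Classical.
Import ListNotations.
From mathcomp Require ssreflect ssrfun ssrbool eqtype ssrnat seq fintype ssralg ssrnum matrix.
From mathcomp Require interval set_interval boolp classical_sets reals topology normedtype Rstruct Rstruct_topology derive.
Open Scope R_scope.

(* From [0] the walk steps to [1] or into [H] at [v0], each with probability [1/2].  In [H] the
   walk killed at [0] has a transition operator [Q], self-adjoint for the degree-weighted inner
   product.  Testing with constants shows that its top eigenvalue satisfies
   [lam >= 1 - 1/(3n+1)], and the spectral gap of [H] forces the top eigenvector to put mass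
   [>~ 1/n] on [v0]; on the orthogonal complement [Q] contracts.  Hence
   [P(tau_0 = t) >~ lam^t / n] while [P(tau_0 >= t) <~ lam^t + t^(-1/2)], the second term being
   the survival of the half-line walk.  For [n ~ K t / log t] we have [lam^t >= t^(-1/6)], which
   dominates [t^(-1/2)], and the ratio is [>~ 1/n ~ log t / t]. *)

(** * Finite sums *)

Lemma sum_lt_0 f : sum_lt 0 f = 0.
Proof. reflexivity. Qed.

Lemma sum_lt_S n f : sum_lt (S n) f = sum_lt n f + f n.
Proof.
  unfold sum_lt. rewrite seq_S, map_app. simpl.
  induction (map f (seq 0 n)) as [|a l IH]; simpl; [ring|]. rewrite IH. ring.
Qed.

Lemma sum_lt_ext n f g : (forall i, (i < n)%nat -> f i = g i) -> sum_lt n f = sum_lt n g.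
Proof.
  induction n; intros H. reflexivity.
  rewrite !sum_lt_S. rewrite IHn. rewrite H by lia. reflexivity. intros; apply H; lia.
Qed.

Lemma sum_lt_plus n f g : sum_lt n (fun i => f i + g i) = sum_lt n f + sum_lt n g.
Proof. induction n. simpl; unfold sum_lt; simpl; ring. rewrite !sum_lt_S, IHn. ring. Qed.

Lemma sum_lt_minus n f g : sum_lt n (fun i => f i - g i) = sum_lt n f - sum_lt n g.
Proof. induction n. unfold sum_lt; simpl; ring. rewrite !sum_lt_S, IHn. ring. Qed.

Lemma sum_lt_scal n c f : sum_lt n (fun i => c * f i) = c * sum_lt n f.
Proof. induction n. unfold sum_lt; simpl; ring. rewrite !sum_lt_S, IHn. ring. Qed.

Lemma sum_lt_scalr n c f : sum_lt n (fun i => f i * c) = sum_lt n f * c.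
Proof. induction n. unfold sum_lt; simpl; ring. rewrite !sum_lt_S, IHn. ring. Qed.

Lemma sum_lt_const0 n : sum_lt n (fun _ => 0) = 0.
Proof. induction n. reflexivity. rewrite sum_lt_S, IHn. ring. Qed.

Lemma sum_lt_const n c : sum_lt n (fun _ => c) = INR n * c.
Proof. induction n. unfold sum_lt; simpl; ring. rewrite sum_lt_S, IHn, S_INR. ring. Qed.

Lemma sum_lt_le n f g : (forall i, (i < n)%nat -> f i <= g i) -> sum_lt n f <= sum_lt n g.
Proof.
  induction n; intros H. unfold sum_lt; simpl; lra.
  rewrite !sum_lt_S. assert (f n <= g n) by (apply H; lia).
  assert (sum_lt n f <= sum_lt n g) by (apply IHn; intros; apply H; lia). lra.
Qed.

Lemma sum_lt_nonneg n f : (forall i, (i < n)%nat -> 0 <= f i) -> 0 <= sum_lt n f.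
Proof. intros H. rewrite <- (sum_lt_const0 n). apply sum_lt_le. auto. Qed.

Lemma sum_lt_term n f j : (forall i, (i < n)%nat -> 0 <= f i) -> (j < n)%nat -> f j <= sum_lt n f.
Proof.
  induction n; intros H Hj. lia.
  rewrite sum_lt_S. destruct (Nat.eq_dec j n).
  - subst. assert (0 <= sum_lt n f) by (apply sum_lt_nonneg; intros; apply H; lia). lra.
  - assert (f j <= sum_lt n f) by (apply IHn; [intros; apply H; lia | lia]).
    assert (0 <= f n) by (apply H; lia). lra.
Qed.

Lemma sum_lt_swap n m (F : nat -> nat -> R) :
  sum_lt n (fun i => sum_lt m (fun j => F i j)) = sum_lt m (fun j => sum_lt n (fun i => F i j)).
Proof.
  induction n. rewrite sum_lt_0. symmetry. apply sum_lt_const0.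
  rewrite sum_lt_S, IHn, <- sum_lt_plus. apply sum_lt_ext. intros. rewrite sum_lt_S. reflexivity.
Qed.

Lemma sum_lt_single n f j : (j < n)%nat -> sum_lt n (fun i => if Nat.eqb i j then f i else 0) = f j.
Proof.
  induction n; intros Hj. lia.
  rewrite sum_lt_S. destruct (Nat.eq_dec j n).
  - subst. rewrite Nat.eqb_refl. rewrite (sum_lt_ext n _ (fun _ => 0)). rewrite sum_lt_const0. ring.
    intros i Hi. destruct (Nat.eqb_spec i n); [lia|reflexivity].
  - rewrite IHn by lia. destruct (Nat.eqb_spec n j); [lia|ring].
Qed.

Lemma rsum_app l1 l2 : rsum (l1 ++ l2) = rsum l1 + rsum l2.
Proof. induction l1; simpl. unfold rsum; simpl; ring. unfold rsum in *; simpl. rewrite IHl1. ring. Qed.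

Lemma rsum_filter_seq (p : nat -> bool) (f : nat -> R) a n :
  rsum (map f (filter p (seq a n))) = rsum (map (fun i => if p i then f i else 0) (seq a n)).
Proof.
  revert a. induction n; intros a. reflexivity.
  simpl. destruct (p a); simpl; unfold rsum in *; simpl; rewrite IHn; ring.
Qed.

Lemma rsum_filter (p : nat -> bool) (f : nat -> R) n :
  rsum (map f (filter p (seq 0 n))) = sum_lt n (fun i => if p i then f i else 0).
Proof. apply rsum_filter_seq. Qed.

Lemma rsum_map_const1 (A : Type) (l : list A) : rsum (map (fun _ => 1) l) = INR (length l).
Proof. induction l; simpl. reflexivity. unfold rsum in *; simpl. rewrite IHl. destruct (length l); simpl; ring. Qed.

Lemma sum_lt_shift m f : sum_lt (S m) f = f 0%nat + sum_lt m (fun s => f (S s)).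
Proof.
  induction m. rewrite sum_lt_S, !sum_lt_0. ring.
  rewrite sum_lt_S, IHm, (sum_lt_S m). ring.
Qed.

Lemma rsum_map_seq1 k f : rsum (map f (seq 1 k)) = sum_lt k (fun j => f (S j)).
Proof. unfold sum_lt. rewrite <- seq_shift, map_map. reflexivity. Qed.

(** * Quadratic forms and Rayleigh quotients *)

Definition matvec n (A : nat -> nat -> R) (u : nat -> R) (x : nat) := sum_lt n (fun y => A x y * u y).
Definition bilin n (A : nat -> nat -> R) (a b : nat -> R) := sum_lt n (fun x => a x * matvec n A b x).

Module RowMax.
Import ssreflect ssrfun ssrbool eqtype ssrnat seq fintype ssralg ssrnum matrix.
Import interval set_interval boolp classical_sets reals topology normedtype Rstruct Rstruct_topology derive.
Import GRing.Theory Num.Theory.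
Local Open Scope classical_set_scope.

(* Vectors [nat -> R] are only ever inspected below [n]; this is the bridge to ['rV[R]_n]. *)
Definition row_coord n (V : 'rV[R]_n) (i : nat) : R :=
  match (insub i : option 'I_n) with Some j => V ord0 j | None => 0%R end.
Arguments row_coord {n} V i.

Lemma row_coord_continuous n i : continuous (fun V : 'rV[R]_n => row_coord V i).
Proof.
  rewrite /row_coord. case: insubP => [j _ _|_].
  - exact: coord_continuous.
  - exact: cst_continuous.
Qed.

Lemma rsum_continuous n T (f : T -> 'rV[R]_n -> R) (l : list T) :
  (forall i, continuous (f i)) -> continuous (fun V => rsum (List.map (fun i => f i V) l)).
Proof.
  move=> H; elim: l => [|a l IH] /=.
  - exact: cst_continuous.
  - move=> x. exact: (@continuousD R R^o _ (f a) _ x (H a x) (IH x)).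
Qed.

Lemma sum_lt_continuous n m (f : nat -> 'rV[R]_n -> R) :
  (forall i, continuous (f i)) -> continuous (fun V => sum_lt m (fun i => f i V)).
Proof. move=> H; rewrite /sum_lt. exact: rsum_continuous. Qed.

Lemma mul_continuous n (f g : 'rV[R]_n -> R) :
  continuous f -> continuous g -> continuous (fun V => f V * g V).
Proof. move=> Hf Hg x. exact: (@continuousM R _ f g x (Hf x) (Hg x)). Qed.

Lemma row_coord_row n (u : nat -> R) i : (i < n)%coq_nat -> row_coord (\row_(j < n) u j)%R i = u i.
Proof.
  move=> Hi. rewrite /row_coord. case: insubP => [j _ hj|hn].
  - by rewrite mxE hj.
  - exfalso. move/negP: hn. apply. by apply/ltP.
Qed.

Lemma row_coord_ord n (V : 'rV[R]_n) (i : 'I_n) : row_coord V i = V ord0 i.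
Proof. by rewrite /row_coord valK. Qed.

Section Sphere.
Variables (n : nat) (w c : nat -> R).
Hypothesis Hw : forall i, (i < n)%coq_nat -> Rle 1 (w i).

Let wnorm (V : 'rV[R]_n) := sum_lt n (fun i => w i * (row_coord V i * row_coord V i)).
Let cdot (V : 'rV[R]_n) := sum_lt n (fun i => c i * row_coord V i).
Let Sph := [set V : 'rV[R]_n | wnorm V = 1 /\ cdot V = 0].

(* The constraint [w >= 1] confines the sphere to the cube [-1, 1]^n. *)
Lemma sphere_compact : compact Sph.
Proof.
  have cN : continuous wnorm.
    apply: sum_lt_continuous => i; apply: mul_continuous; first exact: cst_continuous.
    apply: mul_continuous; exact: row_coord_continuous.
  have cC : continuous cdot.
    apply: sum_lt_continuous => i; apply: mul_continuous; [exact: cst_continuous| exact: row_coord_continuous].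
  have clS : closed Sph.
    have -> : Sph = (wnorm @^-1` [set x | x = 1]) `&` (cdot @^-1` [set x | x = 0]).
      by apply/seteqP; split => V /=.
    apply: closedI; apply: preimage_closed; try exact: closed_eq.
    - by move=> x _; apply: cN.
    - by move=> x _; apply: cC.
  pose Cube := [set V : 'rV[R]_n | forall i, (`[(-1)%R, 1%R])%classic (V ord0 i)].
  have cCube : compact Cube.
    apply: (@rV_compact R n (fun=> (`[(-1)%R, 1%R])%classic)) => _.
    exact: segment_compact.
  apply: (subclosed_compact clS cCube) => V [HV _] i /=. rewrite in_itv /=.
  have Hwi : Rle 1 (w i) by apply: Hw; apply/ltP; exact: ltn_ord.
  have Ht : Rle (w i * (row_coord V i * row_coord V i)) 1.
    rewrite -HV. apply: (sum_lt_term n (fun i => w i * (row_coord V i * row_coord V i))).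
    + move=> k Hk. apply: Rmult_le_pos. have := Hw k Hk. lra. apply: Rle_0_sqr.
    + apply/ltP. exact: ltn_ord.
  have Hsq : Rle (V ord0 i * V ord0 i) 1.
    rewrite -row_coord_ord. have := Rle_0_sqr (row_coord V i). rewrite /Rsqr. nra.
  have := Rle_0_sqr (V ord0 i). rewrite /Rsqr => H0.
  apply/andP; split; apply/RleP; [change (Rle (-1) (V ord0 i))|change (Rle (V ord0 i) 1)]; nra.
Qed.

Lemma bilin_attains_max_row (A : nat -> nat -> R) :
  (exists v, wnorm (\row_(j < n) v j)%R = 1 /\ cdot (\row_(j < n) v j)%R = 0) ->
  exists V, Sph V /\ forall U, Sph U -> Rle (bilin n A (row_coord U) (row_coord U)) (bilin n A (row_coord V) (row_coord V)).
Proof.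
  move=> [v Hv].
  have cF : continuous (fun V : 'rV[R]_n => bilin n A (row_coord V) (row_coord V)).
    apply: sum_lt_continuous => i; apply: mul_continuous; first exact: row_coord_continuous.
    apply: sum_lt_continuous => j; apply: mul_continuous; [exact: cst_continuous| exact: row_coord_continuous].
  have [V SV Vmax] := compact_EVT_max (ex_intro _ _ Hv) sphere_compact (continuous_subspaceT cF).
  exists V; split; first by move: SV; rewrite inE.
  by move=> U SU; apply/RleP; apply: Vmax; rewrite inE.
Qed.

End Sphere.

Lemma bilin_attains_max n (A : nat -> nat -> R) (w c : nat -> R) :
  (forall i, (i < n)%coq_nat -> Rle 1 (w i)) ->
  (exists v, sum_lt n (fun i => w i * (v i * v i)) = 1 /\ sum_lt n (fun i => c i * v i) = 0) ->
  exists v, sum_lt n (fun i => w i * (v i * v i)) = 1 /\ sum_lt n (fun i => c i * v i) = 0 /\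
   forall u, sum_lt n (fun i => w i * (u i * u i)) = 1 -> sum_lt n (fun i => c i * u i) = 0 ->
     Rle (bilin n A u u) (bilin n A v v).
Proof.
  move=> Hw [v [Hv1 Hv2]].
  have rowE (u : nat -> R) (f : nat -> R -> R) :
      sum_lt n (fun i => f i (row_coord (\row_(j < n) u j)%R i)) = sum_lt n (fun i => f i (u i)).
    by apply: sum_lt_ext => i Hi; rewrite row_coord_row.
  have [|V [[HV1 HV2] Vmax]] := bilin_attains_max_row n w c Hw A.
    exists v; rewrite (rowE v (fun i x => w i * (x * x))) (rowE v (fun i x => c i * x)).
    by split.
  exists (row_coord V); split; [exact: HV1 | split; [exact: HV2 |]] => u Hu1 Hu2.
  have bilin_row : bilin n A (row_coord (\row_(j < n) u j)%R) (row_coord (\row_(j < n) u j)%R) = bilin n A u u.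
    apply: sum_lt_ext => i Hi; rewrite row_coord_row // /matvec; congr (_ * _).
    by apply: sum_lt_ext => j Hj; rewrite row_coord_row.
  rewrite -bilin_row; apply: Vmax; split.
  - by rewrite (rowE u (fun i x => w i * (x * x))).
  - by rewrite (rowE u (fun i x => c i * x)).
Qed.

End RowMax.

Lemma sum_lt_wsq_eq0 n w f : (forall i, (i < n)%nat -> 0 < w i) ->
  sum_lt n (fun i => w i * (f i * f i)) = 0 -> forall i, (i < n)%nat -> f i = 0.
Proof.
  intros Hw H i Hi. assert (Hle : w i * (f i * f i) <= sum_lt n (fun i => w i * (f i * f i))).
  { apply (sum_lt_term n (fun i => w i * (f i * f i))); auto. intros k Hk.
    apply Rmult_le_pos; [apply Rlt_le, Hw; auto|apply Rle_0_sqr]. }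
  assert (0 <= f i * f i) by apply Rle_0_sqr. specialize (Hw i Hi).
  assert (f i * f i <= 0) by (apply (Rmult_le_reg_l (w i)); auto; rewrite H in Hle; lra).
  nra.
Qed.

Lemma sum_lt_sq_eq0 n f : sum_lt n (fun i => f i * f i) = 0 -> forall i, (i < n)%nat -> f i = 0.
Proof.
  intros H. apply (sum_lt_wsq_eq0 n (fun _ => 1)); [intros; lra|].
  rewrite <- H. apply sum_lt_ext; intros; ring.
Qed.

Lemma quad_nonpos_lin_eq0 a b : (forall e, e * a + e * e * b <= 0) -> a = 0.
Proof.
  intros H. set (d := Rabs b + 1). assert (Hd : 0 < d) by (unfold d; pose proof (Rabs_pos b); lra).
  specialize (H (a / d)). assert (Hb : - b <= Rabs b) by (rewrite <- Rabs_Ropp; apply RRle_abs).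
  assert (H2 : a * a * (d + b) <= 0).
  { assert (Hx : (a / d * a + a / d * (a / d) * b) * (d * d) <= 0) by nra.
    replace ((a / d * a + a / d * (a / d) * b) * (d * d)) with (a * a * (d + b)) in Hx by (field; lra). exact Hx. }
  assert (d + b >= 1) by (unfold d; lra). nra.
Qed.

Section Bilinear.
Variables (n : nat) (A : nat -> nat -> R).

Lemma matvec_ext a b x : (forall y, (y < n)%nat -> a y = b y) -> matvec n A a x = matvec n A b x.
Proof. intros H; unfold matvec; apply sum_lt_ext; intros y Hy; rewrite H; auto. Qed.

Lemma matvec_lin k a b x : matvec n A (fun i => a i + k * b i) x = matvec n A a x + k * matvec n A b x.
Proof. unfold matvec. rewrite <- sum_lt_scal, <- sum_lt_plus. apply sum_lt_ext; intros; ring. Qed.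

Lemma bilin_linl k a b c : bilin n A (fun i => a i + k * b i) c = bilin n A a c + k * bilin n A b c.
Proof. unfold bilin. rewrite <- sum_lt_scal, <- sum_lt_plus. apply sum_lt_ext; intros; ring. Qed.

Lemma bilin_ext a a' b b' : (forall i, (i < n)%nat -> a i = a' i) -> (forall i, (i < n)%nat -> b i = b' i) ->
  bilin n A a b = bilin n A a' b'.
Proof.
  intros Ha Hb. unfold bilin. apply sum_lt_ext; intros i Hi. rewrite Ha by auto. f_equal.
  apply matvec_ext; auto.
Qed.

Lemma bilin_zero_l b : bilin n A (fun _ => 0) b = 0.
Proof. unfold bilin. rewrite (sum_lt_ext n _ (fun _ => 0)), sum_lt_const0 by (intros; ring). reflexivity. Qed.

Lemma bilin_zero_r a : bilin n A a (fun _ => 0) = 0.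
Proof.
  unfold bilin, matvec. rewrite (sum_lt_ext n _ (fun _ => 0)), sum_lt_const0; [reflexivity|].
  intros. rewrite (sum_lt_ext n _ (fun _ => 0)), sum_lt_const0 by (intros; ring). ring.
Qed.

Hypothesis Asym : forall i j, (i < n)%nat -> (j < n)%nat -> A i j = A j i.

Lemma bilin_sym a b : bilin n A a b = bilin n A b a.
Proof.
  unfold bilin, matvec. rewrite (sum_lt_ext n (fun x => a x * _) (fun x => sum_lt n (fun y => a x * A x y * b y))).
  2:{ intros; rewrite <- sum_lt_scal; apply sum_lt_ext; intros; ring. }
  rewrite sum_lt_swap. apply sum_lt_ext; intros y Hy. rewrite <- sum_lt_scal.
  apply sum_lt_ext; intros x Hx. rewrite Asym by auto. ring.
Qed.

Lemma bilin_linr k a b c : bilin n A c (fun i => a i + k * b i) = bilin n A c a + k * bilin n A c b.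
Proof. rewrite bilin_sym, bilin_linl, (bilin_sym a), (bilin_sym b). reflexivity. Qed.

Lemma bilin_sq k g h :
  bilin n A (fun i => g i + k * h i) (fun i => g i + k * h i) = bilin n A g g + 2 * k * bilin n A g h + k * k * bilin n A h h.
Proof. rewrite bilin_linl, !bilin_linr, (bilin_sym h g). ring. Qed.

Lemma bilin_comb a b x y :
  bilin n A (fun i => a * x i + b * y i) (fun i => a * x i + b * y i)
  = a * a * bilin n A x x + 2 * a * b * bilin n A x y + b * b * bilin n A y y.
Proof.
  rewrite (bilin_ext _ (fun i => 0 + a * x i + b * y i) _ (fun i => 0 + a * x i + b * y i)) by (intros; ring).
  rewrite !bilin_linl, !bilin_linr, !bilin_zero_l, !bilin_zero_r, (bilin_sym y x). ring.
Qed.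

Lemma bilin_scal k u : bilin n A (fun i => k * u i) (fun i => k * u i) = k * k * bilin n A u u.
Proof.
  rewrite (bilin_ext _ (fun i => k * u i + 0 * u i) _ (fun i => k * u i + 0 * u i)) by (intros; ring).
  rewrite bilin_comb. ring.
Qed.

Section Rayleigh.
Variables (w c : nat -> R).
Hypothesis Hw : forall i, (i < n)%nat -> 1 <= w i.

Lemma rayleigh_homog v :
  (forall u, sum_lt n (fun i => w i * (u i * u i)) = 1 -> sum_lt n (fun i => c i * u i) = 0 ->
     bilin n A u u <= bilin n A v v) ->
  forall u, sum_lt n (fun i => c i * u i) = 0 ->
    bilin n A u u <= bilin n A v v * sum_lt n (fun i => w i * (u i * u i)).
Proof.
  intros Hmax u Hu. set (N := sum_lt n (fun i => w i * (u i * u i))).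
  assert (HN : 0 <= N).
  { apply sum_lt_nonneg; intros i Hi. apply Rmult_le_pos; [specialize (Hw i Hi); lra|apply Rle_0_sqr]. }
  destruct (Req_dec N 0) as [H0|H0].
  - assert (Hz : forall i, (i < n)%nat -> u i = 0).
    { apply (sum_lt_wsq_eq0 n w); auto. intros i Hi; specialize (Hw i Hi); lra. }
    rewrite (bilin_ext u (fun _ => 0) u (fun _ => 0)), bilin_zero_r by auto. rewrite H0. lra.
  - set (s := sqrt N).
    assert (Hs : 0 < s) by (apply sqrt_lt_R0; lra).
    assert (Hss : s * s = N) by (apply sqrt_sqrt; lra).
    specialize (Hmax (fun i => / s * u i)).
    rewrite bilin_scal in Hmax.
    assert (Hm : / s * / s * bilin n A u u <= bilin n A v v).
    { apply Hmax.
      - rewrite (sum_lt_ext n _ (fun i => / (s * s) * (w i * (u i * u i)))) by (intros; field; lra).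
        rewrite sum_lt_scal. fold N. rewrite Hss. field. lra.
      - rewrite (sum_lt_ext n _ (fun i => / s * (c i * u i))) by (intros; ring).
        rewrite sum_lt_scal, Hu. ring. }
    rewrite <- Hss. apply (Rmult_le_reg_l (/ s * / s)).
    + apply Rmult_lt_0_compat; apply Rinv_0_lt_compat; lra.
    + replace (/ s * / s * (bilin n A v v * (s * s))) with (bilin n A v v) by (field; lra). exact Hm.
Qed.

Lemma rayleigh_stationary v mu :
  (forall u, sum_lt n (fun i => c i * u i) = 0 -> bilin n A u u <= mu * sum_lt n (fun i => w i * (u i * u i))) ->
  bilin n A v v = mu * sum_lt n (fun i => w i * (v i * v i)) ->
  sum_lt n (fun i => c i * v i) = 0 ->
  forall h, sum_lt n (fun i => c i * h i) = 0 ->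
    bilin n A v h = mu * sum_lt n (fun i => w i * (v i * h i)).
Proof.
  intros Hmax Hv Hc h Hh.
  assert (Hq : forall e, e * (2 * (bilin n A v h - mu * sum_lt n (fun i => w i * (v i * h i)))) +
       e * e * (bilin n A h h - mu * sum_lt n (fun i => w i * (h i * h i))) <= 0).
  { intros e. specialize (Hmax (fun i => v i + e * h i)).
    assert (Hc' : sum_lt n (fun i => c i * (v i + e * h i)) = 0).
    { rewrite (sum_lt_ext n _ (fun i => c i * v i + e * (c i * h i))) by (intros; ring).
      rewrite sum_lt_plus, sum_lt_scal, Hc, Hh. ring. }
    specialize (Hmax Hc'). rewrite bilin_sq in Hmax.
    rewrite (sum_lt_ext n _ (fun i => w i * (v i * v i) + (2 * e) * (w i * (v i * h i)) + (e * e) * (w i * (h i * h i)))) in Hmax by (intros; ring).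
    rewrite !sum_lt_plus, !sum_lt_scal in Hmax. rewrite Hv in Hmax. lra. }
  pose proof (quad_nonpos_lin_eq0 _ _ Hq). lra.
Qed.

(* The residual [A v - mu w v] of a maximiser is orthogonal to every admissible direction, so it
   vanishes as soon as it is itself admissible. *)
Lemma rayleigh_max_eigvec :
  (exists v, sum_lt n (fun i => w i * (v i * v i)) = 1 /\ sum_lt n (fun i => c i * v i) = 0) ->
  (forall v mu, sum_lt n (fun i => c i * v i) = 0 ->
     sum_lt n (fun i => c i * (matvec n A v i - mu * w i * v i)) = 0) ->
  exists v mu, sum_lt n (fun i => w i * (v i * v i)) = 1 /\ sum_lt n (fun i => c i * v i) = 0 /\
    bilin n A v v = mu /\
    (forall u, sum_lt n (fun i => c i * u i) = 0 -> bilin n A u u <= mu * sum_lt n (fun i => w i * (u i * u i))) /\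
    (forall x, (x < n)%nat -> matvec n A v x = mu * w x * v x).
Proof.
  intros Hfeas Hres.
  destruct (RowMax.bilin_attains_max n A w c Hw Hfeas) as [v [Hv1 [Hv2 Hvmax]]].
  set (mu := bilin n A v v).
  assert (Hhom := rayleigh_homog v Hvmax). fold mu in Hhom.
  assert (Hstat := rayleigh_stationary v mu Hhom ltac:(rewrite Hv1; unfold mu; ring) Hv2).
  set (r := fun y => matvec n A v y - mu * w y * v y).
  specialize (Hstat r (Hres v mu Hv2)).
  assert (Hrr : sum_lt n (fun i => r i * r i) = 0).
  { rewrite bilin_sym in Hstat. unfold bilin in Hstat.
    assert (E : sum_lt n (fun i => r i * r i) =
                sum_lt n (fun x => r x * matvec n A v x) - mu * sum_lt n (fun i => w i * (v i * r i))).
    { rewrite <- sum_lt_scal, <- sum_lt_minus. apply sum_lt_ext; intros. unfold r. ring. }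
    rewrite E, Hstat. ring. }
  exists v, mu. repeat split; auto.
  intros x Hx. assert (Hr := sum_lt_sq_eq0 n r Hrr x Hx). unfold r in Hr. lra.
Qed.

End Rayleigh.

Lemma mean0_bilin_le_of_eigen_bound (d b : R) :
  (forall x, (x < n)%nat -> sum_lt n (fun y => A x y) = d) ->
  (forall mu v, (exists i, (i < n)%nat /\ v i <> 0) -> sum_lt n v = 0 ->
      (forall i, (i < n)%nat -> matvec n A v i = mu * v i) -> mu <= b) ->
  forall u, sum_lt n u = 0 -> bilin n A u u <= b * sum_lt n (fun i => u i * u i).
Proof.
  intros Hrow Heig u Hu.
  assert (Hone : forall f, sum_lt n (fun i => 1 * f i) = sum_lt n f) by (intros; apply sum_lt_ext; intros; ring).
  assert (Hsq : forall f, sum_lt n (fun i => 1 * (f i * f i)) = sum_lt n (fun i => f i * f i))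
    by (intros; apply sum_lt_ext; intros; ring).
  set (N := sum_lt n (fun i => u i * u i)).
  assert (HN : 0 <= N) by (apply sum_lt_nonneg; intros; apply Rle_0_sqr).
  destruct (Req_dec N 0) as [H0|H0].
  - assert (Hz : forall i, (i < n)%nat -> u i = 0) by (apply sum_lt_sq_eq0; auto).
    rewrite (bilin_ext u (fun _ => 0) u (fun _ => 0)), bilin_zero_r by auto. fold N. rewrite H0. lra.
  - set (s := sqrt N).
    assert (Hs : 0 < s) by (apply sqrt_lt_R0; lra).
    assert (Hss : s * s = N) by (apply sqrt_sqrt; lra).
    destruct (rayleigh_max_eigvec (fun _ => 1) (fun _ => 1) ltac:(intros; lra))
      as [v [mu [Hv1 [Hv2 [_ [Hmax Hvec]]]]]].
    + exists (fun i => / s * u i). rewrite Hsq, Hone. split.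
      * rewrite (sum_lt_ext n _ (fun i => / (s * s) * (u i * u i))) by (intros; field; lra).
        rewrite sum_lt_scal. fold N. rewrite Hss. field. lra.
      * rewrite sum_lt_scal, Hu. ring.
    + (* constant row sums make [A] preserve the mean-zero subspace *)
      intros v mu Hv. rewrite Hone in Hv |- *. rewrite sum_lt_minus. unfold matvec. rewrite sum_lt_swap.
      rewrite (sum_lt_ext n (fun y => sum_lt n (fun x => A x y * v y)) (fun y => d * v y)).
      * rewrite sum_lt_scal, Hv, (sum_lt_ext n _ (fun i => mu * v i)) by (intros; ring).
        rewrite sum_lt_scal, Hv. ring.
      * intros y Hy. rewrite <- (Hrow y Hy), <- sum_lt_scalr. apply sum_lt_ext; intros. rewrite Asym by auto. ring.
    + assert (Hmu : mu <= b).
      { rewrite Hone in Hv2. apply (Heig mu v); auto.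
        - apply NNPP; intros E. rewrite Hsq in Hv1.
          rewrite (sum_lt_ext n _ (fun _ => 0)), sum_lt_const0 in Hv1; [lra|].
          intros i Hi. destruct (Req_dec (v i) 0) as [Z|Z]; [rewrite Z; ring|]. exfalso; eauto.
        - intros i Hi. rewrite Hvec by auto. ring. }
      specialize (Hmax u). rewrite Hone, Hsq in Hmax. specialize (Hmax Hu). fold N in Hmax |- *. nra.
Qed.

Lemma matvec_opp v x : matvec n (fun i j => - A i j) v x = - matvec n A v x.
Proof.
  unfold matvec. transitivity (-1 * sum_lt n (fun y => A x y * v y)); [|ring].
  rewrite <- sum_lt_scal. apply sum_lt_ext; intros; ring.
Qed.

Lemma bilin_opp a b : bilin n (fun i j => - A i j) a b = - bilin n A a b.
Proof.
  unfold bilin. transitivity (-1 * sum_lt n (fun x => a x * matvec n A b x)); [|ring].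
  rewrite <- sum_lt_scal. apply sum_lt_ext; intros. rewrite matvec_opp. ring.
Qed.

End Bilinear.

Lemma mean0_bilin_ge_of_eigen_bound n A (d b : R) :
  (forall i j, (i < n)%nat -> (j < n)%nat -> A i j = A j i) ->
  (forall x, (x < n)%nat -> sum_lt n (fun y => A x y) = d) ->
  (forall mu v, (exists i, (i < n)%nat /\ v i <> 0) -> sum_lt n v = 0 ->
      (forall i, (i < n)%nat -> matvec n A v i = mu * v i) -> - b <= mu) ->
  forall u, sum_lt n u = 0 -> - (b * sum_lt n (fun i => u i * u i)) <= bilin n A u u.
Proof.
  intros Asym Hrow Heig u Hu.
  cut (bilin n (fun i j => - A i j) u u <= b * sum_lt n (fun i => u i * u i)); [rewrite bilin_opp; lra|].
  apply (mean0_bilin_le_of_eigen_bound n (fun i j => - A i j) ltac:(intros; cbv beta; rewrite Asym by auto; reflexivity) (- d)); auto.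
  - intros x Hx. rewrite <- (Hrow x Hx). transitivity (-1 * sum_lt n (fun y => A x y)); [|ring].
    rewrite <- sum_lt_scal. apply sum_lt_ext; intros; ring.
  - intros mu v Hnz Hs Hei. cut (- b <= - mu); [lra|]. apply (Heig (- mu) v); auto.
    intros i Hi. rewrite <- (Ropp_involutive (matvec n A v i)), <- (matvec_opp n A v i), Hei by auto. ring.
Qed.

(** * The walk on [H] killed at [0] *)

Definition adjR (adj : nat -> nat -> bool) i j : R := if adj i j then 1 else 0.

(* The walk on [G_t] inside [H], killed when it steps to [0] (possible only from [v0], whose
   degree in [G_t] is [4]): [kill_step] is its transition operator, self-adjoint for [wdot]. *)
Definition wdeg (v0 : nat) (x : nat) : R := if Nat.eqb x v0 then 4 else 3.
Definition indic (v0 : nat) (x : nat) : R := if Nat.eqb x v0 then 1 else 0.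
Definition kill_step n adj v0 (z : nat -> R) (x : nat) : R := matvec n (adjR adj) z x / wdeg v0 x.
Fixpoint kill_iter n adj v0 (m : nat) (z : nat -> R) : nat -> R :=
  match m with O => z | S m' => kill_step n adj v0 (kill_iter n adj v0 m' z) end.
Definition wdot n v0 (a b : nat -> R) := sum_lt n (fun x => wdeg v0 x * a x * b x).
Definition contr (rho : R) := rho / (2 - rho).

Lemma indic_root v0 : indic v0 v0 = 1.
Proof. unfold indic. rewrite Nat.eqb_refl. reflexivity. Qed.

Lemma wdeg_ge3 v0 x : 3 <= wdeg v0 x.
Proof. unfold wdeg; destruct (Nat.eqb x v0); lra. Qed.

Lemma contr_bounds rho : 0 <= rho < 1 -> 0 <= contr rho <= 1.
Proof.
  intros Hrho. unfold contr. split.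
  - apply Rmult_le_pos; [lra| left; apply Rinv_0_lt_compat; lra].
  - apply (Rmult_le_reg_r (2 - rho)); [lra|]. unfold Rdiv. rewrite Rmult_assoc, Rinv_l by lra. lra.
Qed.

Lemma adjR_nonneg adj i j : 0 <= adjR adj i j.
Proof. unfold adjR; destruct (adj i j); lra. Qed.

Section CubicGraph.
Variables (n : nat) (adj : nat -> nat -> bool) (v0 : nat) (rho : R).
Hypothesis Hsym : forall i j, (i < n)%nat -> (j < n)%nat -> adj i j = adj j i.
Hypothesis Hdeg : forall i, (i < n)%nat -> sum_lt n (fun j => adjR adj i j) = 3.
Hypothesis Hv0 : (v0 < n)%nat.
Hypothesis Hrho : 0 <= rho < 1.
Hypothesis Hspec : nontrivial_spectrum_bound n adj rho.

Notation A := (adjR adj).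
Notation B := (bilin n A).
Notation Q := (kill_step n adj v0).
Notation Qpow := (kill_iter n adj v0).
Notation dot := (wdot n v0).
Notation deg := (wdeg v0).

Lemma adjR_sym i j : (i < n)%nat -> (j < n)%nat -> A i j = A j i.
Proof. intros; unfold adjR; rewrite Hsym; auto. Qed.

Lemma adjR_colsum y : (y < n)%nat -> sum_lt n (fun x => A x y) = 3.
Proof. intros Hy. rewrite <- (Hdeg y Hy). apply sum_lt_ext; intros. apply adjR_sym; auto. Qed.

Lemma transH_eigen mu v : (forall i, (i < n)%nat -> matvec n A v i = mu * v i) ->
  forall i, (i < n)%nat -> sum_lt n (fun j => transH adj i j * v j) = (mu / 3) * v i.
Proof.
  intros H i Hi.
  replace (mu / 3 * v i) with ((mu * v i) / 3) by field.
  rewrite <- H by auto. unfold matvec, transH, adjR, Rdiv. rewrite <- sum_lt_scalr.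
  apply sum_lt_ext; intros. ring.
Qed.

Lemma mean0_bilin_le u : sum_lt n u = 0 -> B u u <= 3 * rho * sum_lt n (fun i => u i * u i).
Proof.
  apply (mean0_bilin_le_of_eigen_bound n A adjR_sym 3); [exact Hdeg|].
  intros mu v Hnz Hs Hei. specialize (Hspec (mu / 3) v Hnz Hs (transH_eigen mu v Hei)).
  pose proof (Rle_abs (mu / 3)). lra.
Qed.

Lemma mean0_bilin_ge u : sum_lt n u = 0 -> - (3 * rho * sum_lt n (fun i => u i * u i)) <= B u u.
Proof.
  apply (mean0_bilin_ge_of_eigen_bound n A 3 (3 * rho) adjR_sym); [exact Hdeg|].
  intros mu v Hnz Hs Hei. specialize (Hspec (mu / 3) v Hnz Hs (transH_eigen mu v Hei)).
  pose proof (Rle_abs (- (mu / 3))). rewrite Rabs_Ropp in *. lra.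
Qed.

Lemma matvec_const c x : (x < n)%nat -> matvec n A (fun _ => c) x = 3 * c.
Proof. intros Hx. unfold matvec. rewrite sum_lt_scalr, Hdeg; auto. Qed.

Lemma bilin_one_r a : B a (fun _ => 1) = 3 * sum_lt n a.
Proof. unfold bilin. rewrite <- sum_lt_scal. apply sum_lt_ext; intros. rewrite matvec_const; auto. ring. Qed.

Lemma bilin_diag_le u : B u u <= 3 * sum_lt n (fun i => u i * u i).
Proof.
  assert (E : B u u = sum_lt n (fun x => sum_lt n (fun y => A x y * u x * u y))).
  { unfold bilin, matvec. apply sum_lt_ext; intros. rewrite <- sum_lt_scal. apply sum_lt_ext; intros; ring. }
  assert (H1 : 2 * sum_lt n (fun x => sum_lt n (fun y => A x y * u x * u y)) <=
     sum_lt n (fun x => sum_lt n (fun y => A x y * (u x * u x))) + sum_lt n (fun x => sum_lt n (fun y => A x y * (u y * u y)))).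
  { rewrite <- sum_lt_plus, <- sum_lt_scal. apply sum_lt_le; intros x Hx.
    rewrite <- sum_lt_plus, <- sum_lt_scal. apply sum_lt_le; intros y Hy.
    pose proof (adjR_nonneg adj x y). assert (0 <= (u x - u y) * (u x - u y)) by apply Rle_0_sqr. nra. }
  assert (H2 : sum_lt n (fun x => sum_lt n (fun y => A x y * (u x * u x))) = 3 * sum_lt n (fun i => u i * u i)).
  { rewrite <- sum_lt_scal. apply sum_lt_ext; intros x Hx. rewrite sum_lt_scalr, Hdeg; auto. }
  assert (H3 : sum_lt n (fun x => sum_lt n (fun y => A x y * (u y * u y))) = 3 * sum_lt n (fun i => u i * u i)).
  { rewrite sum_lt_swap, <- sum_lt_scal. apply sum_lt_ext; intros y Hy. rewrite sum_lt_scalr, adjR_colsum; auto. }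
  lra.
Qed.

(* Split [u] into its mean and a mean-zero part; the constant part contributes [3 n s^2 >= 0]. *)
Lemma bilin_diag_ge u : (0 < n)%nat -> - (3 * rho * sum_lt n (fun i => u i * u i)) <= B u u.
Proof.
  intros Hn. set (s := sum_lt n u / INR n). set (w := fun i => u i - s).
  assert (HnR : 0 < INR n) by (apply lt_0_INR; auto).
  assert (Hw : sum_lt n w = 0).
  { unfold w. rewrite sum_lt_minus, sum_lt_const. unfold s. field. lra. }
  assert (Eu : B u u = B w w + 3 * INR n * (s * s)).
  { transitivity (B (fun i => w i + s * 1) (fun i => w i + s * 1)).
    { apply bilin_ext; intros; unfold w; ring. }
    rewrite (bilin_sq n A adjR_sym), !bilin_one_r, Hw, sum_lt_const. ring. }
  assert (E1 : sum_lt n (fun i => u i * u i) = sum_lt n (fun i => w i * w i) + INR n * (s * s)).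
  { rewrite <- sum_lt_const, <- sum_lt_plus.
    transitivity (sum_lt n (fun i => w i * w i + 2 * s * w i + s * s)).
    - apply sum_lt_ext; intros; unfold w; ring.
    - rewrite !sum_lt_plus, sum_lt_scal, Hw, sum_lt_const. ring. }
  assert (H1 := mean0_bilin_ge w Hw).
  assert (0 <= INR n * (s * s)) by (apply Rmult_le_pos; [lra|apply Rle_0_sqr]).
  nra.
Qed.

Lemma wdot_kill a b : dot a (Q b) = B a b.
Proof. unfold wdot, bilin, kill_step. apply sum_lt_ext; intros x Hx. pose proof (wdeg_ge3 v0 x). field. lra. Qed.

Lemma wdot_sym a b : dot a b = dot b a.
Proof. unfold wdot. apply sum_lt_ext; intros; ring. Qed.

Lemma wdot_linl k a b c : dot (fun i => a i + k * b i) c = dot a c + k * dot b c.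
Proof. unfold wdot. rewrite <- sum_lt_scal, <- sum_lt_plus. apply sum_lt_ext; intros; ring. Qed.

Lemma wdot_linr k a b c : dot c (fun i => a i + k * b i) = dot c a + k * dot c b.
Proof. rewrite wdot_sym, wdot_linl, (wdot_sym a), (wdot_sym b). reflexivity. Qed.

Lemma wdot_sq k g h : dot (fun i => g i + k * h i) (fun i => g i + k * h i) = dot g g + 2 * k * dot g h + k * k * dot h h.
Proof. rewrite wdot_linl, !wdot_linr, (wdot_sym h g). ring. Qed.

Lemma wdot_ext a a' b b' : (forall i, (i < n)%nat -> a i = a' i) -> (forall i, (i < n)%nat -> b i = b' i) ->
  dot a b = dot a' b'.
Proof. intros Ha Hb. unfold wdot. apply sum_lt_ext; intros. rewrite Ha, Hb; auto. Qed.

Lemma wdot_self_ge0 a : 0 <= dot a a.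
Proof.
  unfold wdot. apply sum_lt_nonneg; intros. pose proof (wdeg_ge3 v0 i).
  assert (0 <= a i * a i) by apply Rle_0_sqr. nra.
Qed.

Lemma wdot_amgm a b : 2 * dot a b <= dot a a + dot b b.
Proof.
  unfold wdot. rewrite <- sum_lt_plus, <- sum_lt_scal. apply sum_lt_le; intros.
  pose proof (wdeg_ge3 v0 i). assert (0 <= (a i - b i) * (a i - b i)) by apply Rle_0_sqr. nra.
Qed.

Lemma wdot_split a b : dot a b = 3 * sum_lt n (fun i => a i * b i) + a v0 * b v0.
Proof.
  unfold wdot. rewrite <- (sum_lt_single n (fun i => a i * b i) v0 Hv0), <- sum_lt_scal, <- sum_lt_plus.
  apply sum_lt_ext; intros. unfold wdeg. destruct (Nat.eqb i v0); ring.
Qed.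

Lemma wdot_one_one : dot (fun _ => 1) (fun _ => 1) = 3 * INR n + 1.
Proof. rewrite wdot_split, (sum_lt_ext n _ (fun _ => 1)), sum_lt_const by (intros; ring). ring. Qed.

Lemma wdot_indic z : dot (indic v0) z = 4 * z v0.
Proof.
  unfold wdot. rewrite <- (sum_lt_single n (fun i => 4 * z i) v0 Hv0).
  apply sum_lt_ext; intros. unfold wdeg, indic. destruct (Nat.eqb i v0); ring.
Qed.

Lemma wdot_kill_swap a c : dot a (Q c) = dot (Q a) c.
Proof. rewrite wdot_kill, (bilin_sym n A adjR_sym), <- wdot_kill, wdot_sym. reflexivity. Qed.

Lemma wdot_one_kill z : dot (fun _ => 1) (Q z) = dot (fun _ => 1) z - z v0.
Proof.
  rewrite wdot_kill, (bilin_sym n A adjR_sym), bilin_one_r, wdot_split.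
  rewrite (sum_lt_ext n (fun i => 1 * z i) z) by (intros; ring). ring.
Qed.

Lemma kill_step_ext a b x : (forall y, (y < n)%nat -> a y = b y) -> Q a x = Q b x.
Proof. intros H; unfold kill_step; rewrite (matvec_ext n A a b); auto. Qed.

Lemma kill_step_lin k a b x : Q (fun i => a i + k * b i) x = Q a x + k * Q b x.
Proof. unfold kill_step. rewrite (matvec_lin n A). pose proof (wdeg_ge3 v0 x). field. lra. Qed.

Lemma kill_iter_ext m a b x : (forall y, (y < n)%nat -> a y = b y) -> (x < n)%nat -> Qpow m a x = Qpow m b x.
Proof.
  revert x. induction m; intros x H Hx; simpl.
  - auto.
  - apply kill_step_ext. intros; apply IHm; auto.
Qed.

Lemma kill_iter_lin m k a b x : Qpow m (fun i => a i + k * b i) x = Qpow m a x + k * Qpow m b x.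
Proof.
  revert x. induction m; intros x; simpl. reflexivity.
  rewrite <- kill_step_lin. apply kill_step_ext. intros; apply IHm.
Qed.

Lemma kill_iter_add j k a : Qpow (j + k) a = Qpow j (Qpow k a).
Proof. induction j; simpl; auto. rewrite IHj. reflexivity. Qed.

Lemma kill_iter_ge0 m a : (forall i, 0 <= a i) -> forall i, 0 <= Qpow m a i.
Proof.
  induction m; intros Ha i; simpl; auto. unfold kill_step, matvec. apply Rmult_le_pos.
  - apply sum_lt_nonneg; intros. apply Rmult_le_pos. apply adjR_nonneg. apply IHm; auto.
  - pose proof (wdeg_ge3 v0 i). left; apply Rinv_0_lt_compat; lra.
Qed.

Lemma wdot_kill_iter_shift j k a b : dot a (Qpow (j + k) b) = dot (Qpow j a) (Qpow k b).
Proof.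
  revert a. induction j; intros a; simpl. reflexivity.
  rewrite wdot_kill_swap, IHj. f_equal.
  change (Q a) with (Qpow 1 a). rewrite <- kill_iter_add, Nat.add_1_r. reflexivity.
Qed.

Lemma wdot_one_kill_iter m : dot (fun _ => 1) (Qpow m (indic v0)) = 4 - sum_lt m (fun j => Qpow j (indic v0) v0).
Proof.
  induction m.
  - simpl. rewrite wdot_sym, wdot_indic, sum_lt_0. ring.
  - simpl. rewrite wdot_one_kill, IHm, sum_lt_S. ring.
Qed.

Lemma kill_iter_root_le_mass m : 4 * Qpow m (indic v0) v0 <= dot (fun _ => 1) (Qpow m (indic v0)).
Proof.
  assert (Hnn : forall i, 0 <= Qpow m (indic v0) i).
  { apply kill_iter_ge0. intros; unfold indic; destruct (Nat.eqb i v0); lra. }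
  rewrite wdot_split. rewrite (sum_lt_ext n _ (Qpow m (indic v0))) by (intros; ring).
  assert (Qpow m (indic v0) v0 <= sum_lt n (Qpow m (indic v0))) by (apply sum_lt_term; auto).
  lra.
Qed.

Lemma wdot_comb a b x y :
  dot (fun i => a * x i + b * y i) (fun i => a * x i + b * y i) = a * a * dot x x + 2 * a * b * dot x y + b * b * dot y y.
Proof.
  unfold wdot. rewrite <- !sum_lt_scal, <- !sum_lt_plus. apply sum_lt_ext; intros; ring.
Qed.

Lemma wdot_weighted u : dot u u = sum_lt n (fun i => deg i * (u i * u i)).
Proof. unfold wdot. apply sum_lt_ext; intros; ring. Qed.

Lemma top_eigvec_exists : (0 < n)%nat -> exists u1 lam, dot u1 u1 = 1 /\
  (forall x, (x < n)%nat -> matvec n A u1 x = lam * deg x * u1 x) /\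
  (forall u, B u u <= lam * dot u u) /\ 0 <= sum_lt n u1 /\ B u1 u1 = lam.
Proof.
  intros Hn.
  assert (HnR : 0 < INR n) by (apply lt_0_INR; auto).
  assert (Hc0 : forall u, sum_lt n (fun i => 0 * u i) = 0).
  { intros u. rewrite (sum_lt_ext n _ (fun _ => 0)) by (intros; ring). apply sum_lt_const0. }
  destruct (rayleigh_max_eigvec n A adjR_sym deg (fun _ => 0) ltac:(intros i _; pose proof (wdeg_ge3 v0 i); lra))
    as [v [lam [Hv1 [_ [Hlam [Hmax Heig]]]]]]; [|intros; apply Hc0|].
  - set (c := / sqrt (3 * INR n + 1)).
    assert (Hc : c * c = / (3 * INR n + 1)).
    { unfold c. rewrite <- Rinv_mult, sqrt_sqrt by lra. reflexivity. }
    exists (fun _ => c). split; [|apply Hc0].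
    rewrite <- wdot_weighted, wdot_split, sum_lt_const, Hc.
    field. lra.
  - rewrite <- wdot_weighted in Hv1.
    assert (Hmax' : forall u, B u u <= lam * dot u u) by (intros; rewrite wdot_weighted; apply Hmax, Hc0).
    destruct (Rle_dec 0 (sum_lt n v)) as [Hs|Hs].
    + exists v, lam. repeat split; auto.
    + exists (fun i => -1 * v i), lam. repeat split; auto.
      * rewrite <- Hv1. unfold wdot. apply sum_lt_ext; intros; ring.
      * intros x Hx. rewrite <- (Rplus_0_l (-1 * v x)). rewrite (matvec_ext n A _ (fun i => 0 + -1 * v i)) by (intros; ring).
        rewrite (matvec_lin n A), Heig by auto. unfold matvec. rewrite (sum_lt_ext n _ (fun _ => 0)), sum_lt_const0 by (intros; ring). ring.
      * rewrite sum_lt_scal. lra.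
      * rewrite (bilin_scal n A adjR_sym), Hlam. ring.
Qed.

(* Read [a = u1 v0], [s] the mean of [u1] and [W] the squared distance from [u1] to the constant
   [s]; the second-to-last hypothesis is the spectral bound applied to [u1 - s]. *)
Lemma root_mass_arith (nR delta lam W a s : R) :
  0 < nR -> 0 < delta -> 0 < lam <= 1 -> 0 <= W -> 0 <= s ->
  (a - s) * (a - s) <= W -> 3 * delta * W + lam * ((a - s) * a) <= 0 ->
  1 = 3 * W + 3 * nR * (s * s) + a * a ->
  let kap := / (3 * delta) in
  0 <= a /\ a <= s /\ 3 * nR * (s * s) <= 1 /\
  1 <= (3 * nR + 3 * (kap * kap) + 1) * ((1 + kap) * (1 + kap)) * (a * a).
Proof.
  intros HnR Hd Hlam HW Hs0 Hb2 Hstar Hn1 kap. set (b := a - s) in *.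
  assert (Hab0 : b * a <= 0).
  { destruct (Rle_dec (b * a) 0); auto. exfalso.
    assert (0 < lam * (b * a)) by (apply Rmult_lt_0_compat; lra). nra. }
  assert (H3 : 3 * delta * W <= - (b * a)).
  { assert (- (b * a) * lam <= - (b * a) * 1) by (apply Rmult_le_compat_l; lra). nra. }
  assert (H9 : 9 * (delta * delta) * W <= a * a).
  { destruct (Req_dec W 0) as [Z|Z]; [rewrite Z; nra|].
    assert (Hsq : (3 * delta * W) * (3 * delta * W) <= (b * a) * (b * a)).
    { assert (0 <= 3 * delta * W) by (apply Rmult_le_pos; lra). nra. }
    assert ((b * a) * (b * a) <= W * (a * a)).
    { replace ((b * a) * (b * a)) with ((b * b) * (a * a)) by ring. apply Rmult_le_compat_r; [apply Rle_0_sqr|auto]. }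
    apply (Rmult_le_reg_l W); nra. }
  assert (Ha0 : 0 <= a) by (destruct (Rle_dec 0 a); auto; unfold b in *; nra).
  assert (Has : a <= s) by (destruct (Req_dec a 0) as [Z|Z]; [lra|unfold b in *; nra]).
  assert (Hk : kap * (3 * delta) = 1) by (unfold kap; field; lra).
  assert (Hkp : 0 < kap) by (unfold kap; apply Rinv_0_lt_compat; lra).
  assert (HW2 : W <= kap * kap * (a * a)).
  { replace W with ((kap * 3 * delta) * (kap * 3 * delta) * W) by (rewrite <- Rmult_assoc in Hk; rewrite Hk; ring).
    assert (0 <= kap * kap) by apply Rle_0_sqr. nra. }
  assert (Hbk : - b <= kap * a).
  { assert (b * b <= (kap * a) * (kap * a)) by nra.
    assert (0 <= kap * a) by (apply Rmult_le_pos; lra). nra. }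
  split; [auto|split; [auto|split]]; [nra|].
  assert (Hss : s * s <= (1 + kap) * (1 + kap) * (a * a)) by (unfold b in *; nra).
  assert (1 <= (3 * nR + 3 * (kap * kap) + 1) * (s * s)).
  { assert (kap * kap * (a * a) <= kap * kap * (s * s)) by (apply Rmult_le_compat_l; [apply Rle_0_sqr|nra]). nra. }
  assert (0 <= 3 * nR + 3 * (kap * kap) + 1) by (assert (0 <= kap*kap) by apply Rle_0_sqr; lra).
  nra.
Qed.

Section TopEigen.
Variables (u1 : nat -> R) (lam : R).
Hypothesis Hn : (0 < n)%nat.
Hypothesis Hu1 : dot u1 u1 = 1.
Hypothesis Heig : forall x, (x < n)%nat -> matvec n A u1 x = lam * deg x * u1 x.
Hypothesis Hmax : forall u, B u u <= lam * dot u u.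
Hypothesis Hsum : 0 <= sum_lt n u1.
Hypothesis Hlam : B u1 u1 = lam.
Hypothesis Hgap : rho < lam.

Lemma top_eigval_ge : 3 * INR n <= lam * (3 * INR n + 1).
Proof. specialize (Hmax (fun _ => 1)). rewrite wdot_one_one, bilin_one_r, sum_lt_const in Hmax. lra. Qed.

Lemma top_eigval_le1 : lam <= 1.
Proof.
  rewrite <- Hlam. eapply Rle_trans; [apply bilin_diag_le|]. rewrite <- Hu1, wdot_split.
  assert (0 <= u1 v0 * u1 v0) by apply Rle_0_sqr. lra.
Qed.

Lemma kill_iter_top m x : (x < n)%nat -> Qpow m u1 x = lam ^ m * u1 x.
Proof.
  revert x. induction m; intros x Hx; simpl; [ring|].
  unfold kill_step. rewrite (matvec_ext n A _ (fun i => lam ^ m * u1 i)) by (intros; apply IHm; auto).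
  unfold matvec. rewrite (sum_lt_ext n _ (fun y => lam ^ m * (A x y * u1 y))) by (intros; ring).
  rewrite sum_lt_scal. change (sum_lt n (fun y => A x y * u1 y)) with (matvec n A u1 x).
  rewrite Heig by auto. pose proof (wdeg_ge3 v0 x). field. lra.
Qed.

Lemma bilin_top_r g : B g u1 = lam * dot g u1.
Proof. unfold bilin, wdot. rewrite <- sum_lt_scal. apply sum_lt_ext; intros. rewrite Heig; auto. ring. Qed.

Lemma kill_perp g : dot g u1 = 0 -> dot (Q g) u1 = 0.
Proof. intros Hg. rewrite wdot_sym, wdot_kill, (bilin_sym n A adjR_sym), bilin_top_r, Hg. ring. Qed.

(* The combination [v = (sum g) u1 - (sum u1) g] has mean zero, where the spectral bound applies;
   as [lam > rho] this bound transfers to [g]. *)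
Lemma bilin_perp_le g : dot g u1 = 0 -> B g g <= rho * dot g g.
Proof.
  intros Hg. set (S1 := sum_lt n u1). set (Sg := sum_lt n g).
  assert (Hnorm : forall v, 3 * sum_lt n (fun i => v i * v i) <= dot v v).
  { intros v. rewrite wdot_split. assert (0 <= v v0 * v v0) by apply Rle_0_sqr. lra. }
  assert (Hsq : forall v, 0 <= sum_lt n (fun i => v i * v i)) by (intros; apply sum_lt_nonneg; intros; apply Rle_0_sqr).
  destruct (Req_dec Sg 0) as [Hz|Hz].
  - assert (Hb := mean0_bilin_le g Hz). specialize (Hnorm g). specialize (Hsq g). nra.
  - set (v := fun i => Sg * u1 i + (- S1) * g i).
    assert (Hv : sum_lt n v = 0) by (unfold v; rewrite sum_lt_plus, !sum_lt_scal; fold S1 Sg; ring).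
    assert (Hbv : B v v = Sg * Sg * lam + S1 * S1 * B g g).
    { unfold v. rewrite (bilin_comb n A adjR_sym), Hlam, (bilin_sym n A adjR_sym u1 g), bilin_top_r, Hg. ring. }
    assert (Hnv : dot v v = Sg * Sg + S1 * S1 * dot g g).
    { unfold v. rewrite wdot_comb, (wdot_sym u1 g), Hg, Hu1. ring. }
    assert (Hc : B v v <= rho * dot v v).
    { pose proof (mean0_bilin_le v Hv). specialize (Hnorm v). specialize (Hsq v). nra. }
    rewrite Hbv, Hnv in Hc.
    assert (HSg : 0 < Sg * Sg) by (apply Rlt_0_sqr; auto).
    destruct (Rle_dec (B g g) (rho * dot g g)) as [Hle|Hgt]; auto.
    assert (0 <= S1 * S1) by apply Rle_0_sqr. nra.
Qed.

Lemma bilin_diag_ge_wdot g : - (rho * dot g g) <= B g g.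
Proof.
  assert (H := bilin_diag_ge g Hn). rewrite wdot_split.
  assert (0 <= rho * (g v0 * g v0)) by (apply Rmult_le_pos; [lra|apply Rle_0_sqr]).
  lra.
Qed.

(* Polarisation with [h = Q g]: [4 <h, h> = 4 B(g, h) = B(g + h) - B(g - h)], and [g + h] is
   still orthogonal to [u1], whence [(2 - rho) |h|^2 <= rho |g|^2]. *)
Lemma kill_contract g : dot g u1 = 0 -> dot (Q g) (Q g) <= contr rho * dot g g.
Proof.
  intros Hg. set (h := Q g).
  assert (Hh : dot h u1 = 0) by (apply kill_perp; auto).
  assert (Hp : dot (fun i => g i + 1 * h i) u1 = 0) by (rewrite wdot_linl, Hg, Hh; ring).
  assert (H1 := bilin_perp_le _ Hp). assert (H2 := bilin_diag_ge_wdot (fun i => g i + (-1) * h i)).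
  rewrite (bilin_sq n A adjR_sym) in H1, H2. rewrite wdot_sq in H1, H2.
  assert (Ehh : dot h h = B g h) by (unfold h at 2; rewrite wdot_kill, (bilin_sym n A adjR_sym); reflexivity).
  assert (Hpos : 0 <= dot g g) by apply wdot_self_ge0.
  assert (Hk : dot h h * (2 - rho) <= rho * dot g g) by nra.
  unfold contr. apply (Rmult_le_reg_r (2 - rho)); [lra|].
  replace (rho / (2 - rho) * dot g g * (2 - rho)) with (rho * dot g g) by (field; lra). lra.
Qed.

Lemma kill_iter_perp m g : dot g u1 = 0 -> dot (Qpow m g) u1 = 0.
Proof. intros Hg; induction m; simpl; auto. apply kill_perp; auto. Qed.

Lemma kill_iter_contract m g : dot g u1 = 0 -> dot (Qpow m g) (Qpow m g) <= contr rho ^ m * dot g g.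
Proof.
  intros Hg; induction m; simpl; [lra|].
  eapply Rle_trans; [apply kill_contract, kill_iter_perp; auto|].
  pose proof (contr_bounds rho Hrho). rewrite Rmult_assoc. apply Rmult_le_compat_l; lra.
Qed.

Lemma wdot_kill_iter_self_ge m g : dot g u1 = 0 -> - (contr rho ^ (Nat.div2 m) * dot g g) <= dot g (Qpow m g).
Proof.
  intros Hg. set (k := Nat.div2 m).
  assert (Hn1 := kill_iter_contract k g Hg).
  assert (0 <= contr rho ^ k) by (apply pow_le; apply contr_bounds; auto).
  pose proof (wdot_self_ge0 (Qpow k g)).
  destruct (Nat.Even_or_Odd m) as [[p Hp]|[p Hp]].
  - assert (Hk : k = p) by (unfold k; subst; rewrite Nat.div2_double; reflexivity).
    replace m with (k + k)%nat by lia. rewrite wdot_kill_iter_shift.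
    pose proof (wdot_self_ge0 g). nra.
  - assert (Hk : k = p).
    { unfold k; subst. replace (2 * p + 1)%nat with (S (2 * p)) by lia. apply Nat.div2_succ_double. }
    replace m with (k + S k)%nat by lia. rewrite wdot_kill_iter_shift. simpl.
    rewrite wdot_kill. pose proof (bilin_diag_ge_wdot (Qpow k g)). nra.
Qed.

Lemma wdot_kill_iter_le m g g' : dot g u1 = 0 -> dot g' u1 = 0 ->
  dot g' (Qpow m g) <= contr rho ^ (Nat.div2 m) * (dot g' g' + dot g g) / 2.
Proof.
  intros Hg Hg'. set (k := Nat.div2 m).
  assert (Hkm : (k <= m - k /\ m = k + (m - k))%nat)
    by (unfold k; pose proof (Nat.div2_odd m); destruct (Nat.odd m); simpl in *; lia).
  destruct Hkm as [Hkm Hm]. rewrite Hm, wdot_kill_iter_shift.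
  assert (H1 := wdot_amgm (Qpow k g') (Qpow (m - k) g)).
  assert (H2 := kill_iter_contract k g' Hg'). assert (H3 := kill_iter_contract (m - k) g Hg).
  assert (Hr := contr_bounds rho Hrho).
  assert (H4 : contr rho ^ (m - k) <= contr rho ^ k).
  { replace (m - k)%nat with (k + (m - k - k))%nat by lia. rewrite pow_add.
    assert (0 <= contr rho ^ k) by (apply pow_le; lra).
    assert (contr rho ^ (m - k - k) <= 1) by (rewrite <- (pow1 (m - k - k)); apply pow_incr; lra). nra. }
  pose proof (wdot_self_ge0 g). pose proof (wdot_self_ge0 g').
  replace (k + (m - k) - k)%nat with (m - k)%nat by lia.
  assert (contr rho ^ (m - k) * dot g g <= contr rho ^ k * dot g g) by nra. lra.
Qed.

Let perp f := fun i => f i + (- dot f u1) * u1 i.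

Lemma perp_orth f : dot (perp f) u1 = 0.
Proof. unfold perp. rewrite wdot_linl, Hu1. ring. Qed.

Lemma perp_norm_le f : dot (perp f) (perp f) <= dot f f.
Proof. unfold perp. rewrite wdot_sq, Hu1. assert (0 <= dot f u1 * dot f u1) by apply Rle_0_sqr. nra. Qed.

(* Only the [u1]-component survives at rate [lam]; the rest decays at rate [contr rho]. *)
Lemma wdot_kill_iter_split f z m :
  dot f (Qpow m z) = dot (perp f) (Qpow m (perp z)) + dot f u1 * dot z u1 * lam ^ m.
Proof.
  rewrite (wdot_ext f (fun i => perp f i + dot f u1 * u1 i) (Qpow m z)
             (fun i => Qpow m (perp z) i + (dot z u1 * lam ^ m) * u1 i)).
  - rewrite wdot_linl, !wdot_linr, (wdot_sym u1 (Qpow m (perp z))), kill_iter_perp, perp_orth, Hu1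
      by apply perp_orth. ring.
  - intros; unfold perp; ring.
  - intros i Hi. replace (dot z u1 * lam ^ m * u1 i) with (dot z u1 * Qpow m u1 i) by (rewrite kill_iter_top; auto; ring).
    rewrite <- kill_iter_lin. apply kill_iter_ext; auto.
    intros; unfold perp; ring.
Qed.

Lemma kill_iter_root_ge m : 4 * (u1 v0 * u1 v0) * lam ^ m - contr rho ^ (Nat.div2 m) <= Qpow m (indic v0) v0.
Proof.
  assert (E := wdot_kill_iter_split (indic v0) (indic v0) m).
  rewrite !wdot_indic in E.
  assert (H := wdot_kill_iter_self_ge m (perp (indic v0)) (perp_orth _)).
  assert (Hn4 := perp_norm_le (indic v0)).
  rewrite wdot_indic, indic_root in Hn4.
  assert (0 <= contr rho ^ Nat.div2 m) by (apply pow_le; apply contr_bounds; auto).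
  assert (contr rho ^ Nat.div2 m * dot (perp (indic v0)) (perp (indic v0)) <= contr rho ^ Nat.div2 m * 4)
    by (apply Rmult_le_compat_l; lra).
  nra.
Qed.

Variable delta : R.
Hypothesis Hdelta : 0 < delta.
Hypothesis Hdl : delta <= lam - rho.

Lemma top_eigvec_at_root : let s := sum_lt n u1 / INR n in let kap := / (3 * delta) in
  0 <= u1 v0 /\ u1 v0 <= s /\ 3 * INR n * (s * s) <= 1 /\
  1 <= (3 * INR n + 3 * (kap * kap) + 1) * ((1 + kap) * (1 + kap)) * (u1 v0 * u1 v0).
Proof.
  intros s kap.
  assert (HnR : 0 < INR n) by (apply lt_0_INR; auto).
  set (w := fun i => u1 i + (- s) * 1).
  assert (Hw : sum_lt n w = 0).
  { unfold w. rewrite sum_lt_plus, sum_lt_scal, sum_lt_const. unfold s. field. lra. }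
  set (W := sum_lt n (fun i => w i * w i)).
  assert (HBw : B w w = lam * dot w u1).
  { unfold bilin. rewrite (sum_lt_ext n _ (fun x => lam * (deg x * w x * u1 x) + (- s * 3) * w x)).
    - rewrite sum_lt_plus, !sum_lt_scal, Hw. unfold wdot. ring.
    - intros x Hx. unfold w at 2. rewrite (matvec_lin n A), Heig, matvec_const by auto. ring. }
  assert (Hwu : sum_lt n (fun i => w i * u1 i) = W).
  { unfold W. transitivity (sum_lt n (fun i => w i * w i + s * w i)).
    - apply sum_lt_ext; intros; unfold w; ring.
    - rewrite sum_lt_plus, sum_lt_scal, Hw. ring. }
  rewrite wdot_split, Hwu in HBw.
  assert (HS := mean0_bilin_le w Hw). fold W in HS.
  apply (root_mass_arith (INR n) delta lam W (u1 v0) s); auto.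
  - pose proof top_eigval_le1. lra.
  - apply sum_lt_nonneg; intros; apply Rle_0_sqr.
  - unfold s. apply Rmult_le_pos; auto. left; apply Rinv_0_lt_compat; auto.
  - replace (u1 v0 - s) with (w v0) by (unfold w; ring).
    apply (sum_lt_term n (fun i => w i * w i)); auto. intros; apply Rle_0_sqr.
  - replace (u1 v0 - s) with (w v0) by (unfold w; ring).
    assert (delta * W <= (lam - rho) * W) by (apply Rmult_le_compat_r; [apply sum_lt_nonneg; intros; apply Rle_0_sqr|lra]).
    nra.
  - rewrite <- Hu1, wdot_split.
    assert (Hsq : sum_lt n (fun i => u1 i * u1 i) = W + INR n * (s * s)).
    { unfold W. rewrite <- sum_lt_const, <- sum_lt_plus. transitivity (sum_lt n (fun i => w i * w i + 2 * s * w i + s * s)).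
      - apply sum_lt_ext; intros; unfold w; ring.
      - rewrite !sum_lt_plus, sum_lt_scal, Hw. ring. }
    rewrite Hsq. ring.
Qed.

Lemma kill_iter_mass_le m :
  dot (fun _ => 1) (Qpow m (indic v0)) <= 8 * lam ^ m + contr rho ^ (Nat.div2 m) * (3 * INR n + 5) / 2.
Proof.
  destruct top_eigvec_at_root as [Ha0 [Has [H3n _]]].
  set (s := sum_lt n u1 / INR n) in *.
  assert (HnR : 0 < INR n) by (apply lt_0_INR; auto).
  rewrite wdot_kill_iter_split, wdot_indic.
  assert (Hbe : dot (fun _ => 1) u1 = 3 * (INR n * s) + u1 v0).
  { rewrite wdot_split, (sum_lt_ext n _ u1) by (intros; ring). unfold s. field. lra. }
  assert (Halbe : dot (fun _ => 1) u1 * (4 * u1 v0) <= 8).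
  { rewrite Hbe.
    assert (Hs1 : s * s <= 1) by (assert (1 <= INR n) by (apply (le_INR 1); lia); nra).
    assert (u1 v0 * (3 * (INR n * s) + u1 v0) <= s * (3 * (INR n * s) + s)).
    { assert (0 <= INR n * s) by (apply Rmult_le_pos; lra). nra. }
    nra. }
  assert (H9 := wdot_kill_iter_le m _ _ (perp_orth (indic v0)) (perp_orth (fun _ => 1))).
  assert (Hn1 := perp_norm_le (fun _ => 1)). rewrite wdot_one_one in Hn1.
  assert (Hn4 := perp_norm_le (indic v0)).
  rewrite wdot_indic, indic_root in Hn4.
  assert (0 <= contr rho ^ Nat.div2 m) by (apply pow_le; apply contr_bounds; auto).
  assert (0 <= lam ^ m) by (apply pow_le; lra).
  assert (contr rho ^ Nat.div2 m * (dot (perp (fun _ => 1)) (perp (fun _ => 1)) + dot (perp (indic v0)) (perp (indic v0)))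
          <= contr rho ^ Nat.div2 m * (3 * INR n + 5)) by (apply Rmult_le_compat_l; lra).
  assert (dot (fun _ => 1) u1 * (4 * u1 v0) * lam ^ m <= 8 * lam ^ m) by (apply Rmult_le_compat_r; lra).
  unfold Rdiv in *. lra.
Qed.

End TopEigen.

Lemma kill_iter_bounds delta : (0 < n)%nat -> 0 < delta -> (delta + rho) * (3 * INR n + 1) <= 3 * INR n ->
  exists lam, 3 * INR n <= lam * (3 * INR n + 1) /\ lam <= 1 /\ forall m,
    4 / ((3 * INR n + 3 * (/(3 * delta) * /(3 * delta)) + 1) * ((1 + /(3 * delta)) * (1 + /(3 * delta)))) * lam ^ m
      - contr rho ^ (Nat.div2 m) <= Qpow m (indic v0) v0 /\
    dot (fun _ => 1) (Qpow m (indic v0)) <= 8 * lam ^ m + contr rho ^ (Nat.div2 m) * (3 * INR n + 5) / 2.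
Proof.
  intros Hn Hd Hgap.
  destruct (top_eigvec_exists Hn) as [u1 [lam [Hu1 [Heig [Hmax [Hsum Hlam]]]]]].
  assert (HnR : 0 < INR n) by (apply lt_0_INR; auto).
  assert (Hge := top_eigval_ge lam Hmax).
  assert (Hdl : delta <= lam - rho) by (apply (Rmult_le_reg_r (3 * INR n + 1)); nra).
  assert (Hgap' : rho < lam) by lra.
  exists lam. split; auto. split; [apply (top_eigval_le1 u1 lam Hu1 Hlam)|].
  intros m. split.
  - destruct (top_eigvec_at_root u1 lam Hn Hu1 Heig Hsum Hlam Hgap' delta Hd Hdl) as [_ [_ [_ Hdep]]].
    eapply Rle_trans; [|apply (kill_iter_root_ge u1 lam Hn Hu1 Heig Hmax Hlam Hgap')].
    set (D := (3 * INR n + 3 * (/ (3 * delta) * / (3 * delta)) + 1) * ((1 + / (3 * delta)) * (1 + / (3 * delta)))) in *.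
    assert (HD : 0 < D).
    { assert (0 < / (3 * delta)) by (apply Rinv_0_lt_compat; lra).
      unfold D; apply Rmult_lt_0_compat; nra. }
    assert (0 <= lam ^ m) by (apply pow_le; lra).
    assert (4 / D <= 4 * (u1 v0 * u1 v0)).
    { apply (Rmult_le_reg_r D); auto. unfold Rdiv. rewrite Rmult_assoc, Rinv_l by lra. nra. }
    assert (4 / D * lam ^ m <= 4 * (u1 v0 * u1 v0) * lam ^ m) by (apply Rmult_le_compat_r; auto). lra.
  - apply (kill_iter_mass_le u1 lam Hn Hu1 Heig Hsum Hlam Hgap' delta Hd Hdl).
Qed.

End CubicGraph.

(** * Survival on the half-line *)

(* [strip_surv L m k]: probability that simple random walk from [k] stays inside [(0, L)] during
   [m] steps. *)
Fixpoint strip_surv (L m k : nat) : R :=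
  match m with
  | O => if andb (Nat.ltb 0 k) (Nat.ltb k L) then 1 else 0
  | S m' => if andb (Nat.ltb 0 k) (Nat.ltb k L) then (strip_surv L m' (pred k) + strip_surv L m' (S k)) / 2 else 0
  end.

Section Half.
Variable L : nat.
Hypothesis HL : (1 <= L)%nat.

Lemma strip_surv_bounds m k : 0 <= strip_surv L m k <= 1.
Proof.
  revert k; induction m; intros k; simpl; destruct (andb _ _); try lra.
  pose proof (IHm (pred k)); pose proof (IHm (S k)); lra.
Qed.

Lemma strip_surv_out m k : (k = 0 \/ L <= k)%nat -> strip_surv L m k = 0.
Proof.
  intros H. destruct m; simpl; destruct (Nat.ltb_spec 0 k); destruct (Nat.ltb_spec k L); simpl; auto; lia.
Qed.

Lemma strip_surv_S_le m k : strip_surv L (S m) k <= strip_surv L m k.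
Proof.
  revert k; induction m; intros k.
  - simpl. destruct (andb _ _). pose proof (strip_surv_bounds 0 (pred k)); pose proof (strip_surv_bounds 0 (S k)); simpl in *; lra. lra.
  - change (strip_surv L (S (S m)) k) with (if andb (Nat.ltb 0 k) (Nat.ltb k L) then (strip_surv L (S m) (pred k) + strip_surv L (S m) (S k)) / 2 else 0).
    change (strip_surv L (S m) k) with (if andb (Nat.ltb 0 k) (Nat.ltb k L) then (strip_surv L m (pred k) + strip_surv L m (S k)) / 2 else 0).
    destruct (andb _ _). pose proof (IHm (pred k)); pose proof (IHm (S k)); lra. lra.
Qed.

Lemma strip_surv_antitone s m k : (s <= m)%nat -> strip_surv L m k <= strip_surv L s k.
Proof.
  intros H. induction H. lra. pose proof (strip_surv_S_le m k). lra.
Qed.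

(* [k (L - k)] is the expected exit time from the strip. *)
Lemma strip_surv_sum_le m k : (k <= L)%nat -> sum_lt m (fun s => strip_surv L s k) <= INR k * (INR L - INR k).
Proof.
  revert k; induction m; intros k Hk.
  - rewrite sum_lt_0. assert (INR k <= INR L) by (apply le_INR; auto). pose proof (pos_INR k). nra.
  - rewrite sum_lt_shift.
    destruct (Nat.eq_dec k 0) as [E|E].
    + subst. rewrite (sum_lt_ext m _ (fun _ => 0)) by (intros; apply strip_surv_out; auto).
      rewrite sum_lt_const0, strip_surv_out by auto. simpl. lra.
    + destruct (Nat.eq_dec k L) as [E2|E2].
      * subst. rewrite (sum_lt_ext m _ (fun _ => 0)) by (intros; apply strip_surv_out; lia).
        rewrite sum_lt_const0, strip_surv_out by lia. lra.
      * assert (Hin : andb (Nat.ltb 0 k) (Nat.ltb k L) = true).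
        { destruct (Nat.ltb_spec 0 k); destruct (Nat.ltb_spec k L); simpl; auto; lia. }
        simpl (strip_surv L 0 k). rewrite Hin.
        rewrite (sum_lt_ext m (fun s => strip_surv L (S s) k) (fun s => (strip_surv L s (pred k) + strip_surv L s (S k)) / 2))
          by (intros; simpl; rewrite Hin; reflexivity).
        unfold Rdiv. rewrite sum_lt_scalr, sum_lt_plus.
        assert (H1 := IHm (pred k) ltac:(lia)). assert (H2 := IHm (S k) ltac:(lia)).
        rewrite S_INR in H2. replace (INR (pred k)) with (INR k - 1) in H1 by (destruct k; [lia|rewrite S_INR; simpl; ring]).
        nra.
Qed.

Lemma strip_surv_1_le m : INR m * strip_surv L m 1 <= INR L.
Proof.
  assert (H : sum_lt m (fun s => strip_surv L s 1) <= INR L).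
  { eapply Rle_trans. apply strip_surv_sum_le. lia. simpl. pose proof (pos_INR L). lra. }
  assert (H2 : sum_lt m (fun _ => strip_surv L m 1) <= sum_lt m (fun s => strip_surv L s 1)).
  { apply sum_lt_le; intros. apply strip_surv_antitone. lia. }
  rewrite sum_lt_const in H2. lra.
Qed.

(* Optional stopping: the walk from [k] reaches [L] before [0] with probability [k / L]. *)
Definition surv_majorant m k := Rmin 1 (strip_surv L m k + INR k / INR L).

Variable W : nat -> nat -> R.
Hypothesis HW0 : forall m, W m 0 = 0.
Hypothesis HW1 : forall k, W 0 (S k) = 1.
Hypothesis HWS : forall m k, W (S m) (S k) = (W m k + W m (S (S k))) / 2.

Lemma surv_ge0 m k : 0 <= W m k.
Proof.
  revert k; induction m; intros k; destruct k.
  - rewrite HW0; lra.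
  - rewrite HW1; lra.
  - rewrite HW0; lra.
  - rewrite HWS. pose proof (IHm k); pose proof (IHm (S (S k))); lra.
Qed.

Lemma surv_le1 m k : W m k <= 1.
Proof.
  revert k; induction m; intros k; destruct k.
  - rewrite HW0; lra.
  - rewrite HW1; lra.
  - rewrite HW0; lra.
  - rewrite HWS. pose proof (IHm k); pose proof (IHm (S (S k))); lra.
Qed.

Lemma surv_le_majorant m k : W m k <= surv_majorant m k.
Proof.
  assert (HLp : 0 < INR L) by (apply lt_0_INR; lia).
  revert k; induction m; intros k.
  - unfold surv_majorant. destruct k.
    + rewrite HW0. rewrite strip_surv_out by auto. simpl. unfold Rdiv. rewrite Rmult_0_l, Rplus_0_l.
      unfold Rmin; destruct (Rle_dec 1 0); lra.
    + rewrite HW1. apply Rmin_glb. lra.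
      simpl (strip_surv L 0 (S k)). destruct (Nat.ltb_spec (S k) L); cbn [andb Nat.ltb Nat.leb].
      * pose proof (pos_INR (S k)). assert (0 <= INR (S k) / INR L) by (apply Rmult_le_pos; [lra|left; apply Rinv_0_lt_compat; lra]). lra.
      * assert (INR L <= INR (S k)) by (apply le_INR; lia).
        assert (1 <= INR (S k) / INR L). { apply (Rmult_le_reg_r (INR L)); auto. unfold Rdiv. rewrite Rmult_assoc, Rinv_l by lra. lra. }
        lra.
  - unfold surv_majorant. destruct k.
    + rewrite HW0. rewrite strip_surv_out by auto. simpl. unfold Rdiv. rewrite Rmult_0_l, Rplus_0_l.
      unfold Rmin; destruct (Rle_dec 1 0); lra.
    + rewrite HWS. pose proof (IHm k) as H1. pose proof (IHm (S (S k))) as H2. unfold surv_majorant in H1, H2.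
      apply Rmin_glb.
      * pose proof (surv_le1 m k); pose proof (surv_le1 m (S (S k))); lra.
      * pose proof (Rmin_r 1 (strip_surv L m k + INR k / INR L)). pose proof (Rmin_r 1 (strip_surv L m (S (S k)) + INR (S (S k)) / INR L)).
        simpl (strip_surv L (S m) (S k)). destruct (Nat.ltb_spec (S k) L); cbn [andb Nat.ltb Nat.leb pred].
        -- rewrite !S_INR in *. unfold Rdiv in *. lra.
        -- assert (INR L <= INR (S k)) by (apply le_INR; lia).
           assert (1 <= INR (S k) / INR L). { apply (Rmult_le_reg_r (INR L)); auto. unfold Rdiv. rewrite Rmult_assoc, Rinv_l by lra. lra. }
           pose proof (surv_le1 m k); pose proof (surv_le1 m (S (S k))); lra.
Qed.

Lemma surv_1_le m : (1 <= m)%nat -> W m 1 <= INR L / INR m + 1 / INR L.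
Proof.
  intros Hm. assert (HLp : 0 < INR L) by (apply lt_0_INR; lia).
  assert (Hmp : 0 < INR m) by (apply lt_0_INR; lia).
  assert (H1 := surv_le_majorant m 1). unfold surv_majorant in H1. pose proof (Rmin_r 1 (strip_surv L m 1 + INR 1 / INR L)).
  assert (H2 := strip_surv_1_le m). assert (strip_surv L m 1 <= INR L / INR m).
  { apply (Rmult_le_reg_l (INR m)); auto. replace (INR m * (INR L / INR m)) with (INR L) by (field; lra). lra. }
  simpl INR in *. lra.
Qed.

End Half.

Lemma half_line_surv_le (W : nat -> nat -> R) :
  (forall m, W m O = 0) -> (forall k, W O (S k) = 1) ->
  (forall m k, W (S m) (S k) = (W m k + W m (S (S k))) / 2) ->
  forall (m : nat) (u : R), 6 <= u -> u ^ 6 <= 2 * INR m -> W m 1%nat <= / u.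
Proof.
  intros HW0 HW1 HWS m u Hu Hm.
  assert (Hu6 : 6 * 6 * 6 <= u ^ 6).
  { replace (u ^ 6) with ((u * u * u) * (u * u * u)) by ring.
    assert (6 * 6 * 6 <= u * u * u) by (assert (36 <= u * u) by nra; nra). nra. }
  set (L := Nat.sqrt m).
  assert (HLs := Nat.sqrt_spec m (Nat.le_0_l m)). fold L in HLs.
  assert (HmL : (1 <= m)%nat) by (destruct m; [simpl in Hm; lra|lia]).
  assert (HL1 : (1 <= L)%nat) by (destruct L; simpl in HLs; lia).
  assert (HLR : 2 * u <= INR L).
  { assert (Hlt : INR m < (INR L + 1) * (INR L + 1)).
    { rewrite <- S_INR, <- mult_INR. apply lt_INR. lia. }
    destruct (Rle_dec (2 * u) (INR L)) as [H|H]; auto. exfalso.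
    assert (INR L + 1 < 3 * u) by lra.
    assert ((INR L + 1) * (INR L + 1) < (3 * u) * (3 * u)) by (apply Rmult_le_0_lt_compat; pose proof (pos_INR L); lra).
    assert (Hm9 : INR m < 9 * (u * u)) by nra.
    replace (u ^ 6) with ((u * u) * (u * u) * (u * u)) in Hm by ring.
    set (p := u * u) in *. assert (36 <= p) by (unfold p; nra).
    assert (p * p * p < 18 * p) by lra.
    assert (36 * 36 * p <= p * p * p) by (assert (36 * 36 <= p * p) by nra; nra). lra. }
  assert (HL0 : 0 < INR L) by lra.
  assert (HmR : 0 < INR m) by (apply lt_0_INR; lia).
  eapply Rle_trans; [apply (surv_1_le L HL1 W HW0 HW1 HWS m HmL)|].
  assert (INR L / INR m <= 1 / INR L).
  { apply (Rmult_le_reg_r (INR m * INR L)); [nra|].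
    replace (INR L / INR m * (INR m * INR L)) with (INR L * INR L) by (field; lra).
    replace (1 / INR L * (INR m * INR L)) with (INR m) by (field; lra).
    rewrite <- mult_INR. apply le_INR. lia. }
  assert (2 / INR L <= / u).
  { apply (Rmult_le_reg_r (INR L * u)); [nra|].
    replace (2 / INR L * (INR L * u)) with (2 * u) by (field; lra).
    replace (/ u * (INR L * u)) with (INR L) by (field; lra). lra. }
  lra.
Qed.

(** * Returns to [0] in [G_t] *)

Lemma cubic_graph_deg n adj : cubic_graph n adj -> forall i, (i < n)%nat -> sum_lt n (fun j => adjR adj i j) = 3.
Proof.
  intros [_ [_ H]] i Hi. specialize (H i Hi). unfold nbrsH in H.
  unfold adjR. rewrite <- (rsum_filter (adj i) (fun _ => 1) n). rewrite rsum_map_const1, H. simpl. ring.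
Qed.

Section Walk.
Variables (n : nat) (adj : nat -> nat -> bool) (v0 : nat).
Hypothesis Hv0 : (v0 < n)%nat.
Hypothesis Hdeg : forall i, (i < n)%nat -> sum_lt n (fun j => adjR adj i j) = 3.

Notation hit := (first_hit n adj v0).

Lemma degG_Hv x : (x < n)%nat -> degG n adj v0 (Hv x) = wdeg v0 x.
Proof.
  intros Hx. unfold degG. simpl. rewrite app_length, map_length.
  assert (H3 : INR (length (nbrsH n adj x)) = 3).
  { unfold nbrsH. rewrite <- rsum_map_const1, rsum_filter. rewrite <- (Hdeg x Hx). apply sum_lt_ext; intros.
    unfold adjR. destruct (adj x i); reflexivity. }
  rewrite plus_INR, H3. unfold wdeg. destruct (Nat.eqb x v0); simpl; ring.
Qed.

Lemma first_hit_Hv_S s x : (x < n)%nat ->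
  hit (S s) (Hv x) = / wdeg v0 x * (matvec n (adjR adj) (fun y => hit s (Hv y)) x +
                        (if Nat.eqb x v0 then (match s with O => 1 | S _ => 0 end) else 0)).
Proof.
  intros Hx. cbn [first_hit]. rewrite degG_Hv by auto. cbn [nbrsG].
  rewrite map_app, rsum_app, map_map. unfold nbrsH. rewrite rsum_filter.
  rewrite Rmult_plus_distr_l. f_equal.
  - unfold matvec. rewrite <- sum_lt_scal. apply sum_lt_ext; intros. unfold adjR. destruct (adj x i); ring.
  - destruct (Nat.eqb x v0); unfold rsum; simpl; ring.
Qed.

(* The walk must sit at [v0] after [s] steps inside [H], then step to [0] with probability [1/4]. *)
Lemma first_hit_Hv s x : (x < n)%nat -> hit (S s) (Hv x) = kill_iter n adj v0 s (indic v0) x / 4.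
Proof.
  revert x. induction s; intros x Hx.
  - rewrite first_hit_Hv_S by auto. simpl. unfold matvec.
    rewrite (sum_lt_ext n _ (fun _ => 0)) by (intros; simpl; ring). rewrite sum_lt_const0.
    unfold indic, wdeg. destruct (Nat.eqb_spec x v0); simpl; field.
  - rewrite first_hit_Hv_S by auto. simpl. unfold kill_step.
    rewrite (matvec_ext n (adjR adj) _ (fun y => kill_iter n adj v0 s (indic v0) y / 4)) by (intros; apply IHs; auto).
    unfold matvec. rewrite (sum_lt_ext n _ (fun y => / 4 * (adjR adj x y * kill_iter n adj v0 s (indic v0) y))) by (intros; unfold Rdiv; ring).
    rewrite sum_lt_scal. pose proof (wdeg_ge3 v0 x). destruct (Nat.eqb x v0); field; lra.
Qed.

(* [line_hit s k = P_k(tau_0 = s)] on the half-line; the value at [k = 0] makes the recursion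
   [line_hit_S] uniform in [k]. *)
Definition line_hit (s k : nat) : R := match k with O => if Nat.eqb s 0 then 1 else 0 | _ => hit s (Lv k) end.

Lemma first_hit_Lv_S s k : hit (S s) (Lv (S k)) = / 2 * line_hit s k + / 2 * hit s (Lv (S (S k))).
Proof.
  cbn [first_hit]. unfold degG. cbn [nbrsG length]. replace (INR 2) with 2 by (simpl; ring).
  unfold rsum. cbn [map fold_right]. destruct k.
  - unfold line_hit. destruct s; cbn [Nat.eqb]; ring.
  - unfold line_hit. ring.
Qed.

Lemma line_hit_S s k : line_hit (S s) (S k) = (line_hit s k + line_hit s (S (S k))) / 2.
Proof. change (line_hit (S s) (S k)) with (hit (S s) (Lv (S k))). rewrite first_hit_Lv_S. unfold line_hit at 3. field. Qed.

Lemma line_hit_0 k : line_hit 0 (S k) = 0.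
Proof. reflexivity. Qed.

Definition line_surv (m k : nat) : R := 1 - sum_lt (S m) (fun s => line_hit s k).

Lemma line_surv_0 k : line_surv 0 (S k) = 1.
Proof. unfold line_surv. rewrite sum_lt_S, sum_lt_0, line_hit_0. ring. Qed.

Lemma line_surv_origin m : line_surv m 0 = 0.
Proof. unfold line_surv. rewrite sum_lt_shift. rewrite (sum_lt_ext m (fun s => line_hit (S s) 0) (fun _ => 0)) by (intros; reflexivity).
  rewrite sum_lt_const0. unfold line_hit. simpl. ring. Qed.

Lemma line_surv_S m k : line_surv (S m) (S k) = (line_surv m k + line_surv m (S (S k))) / 2.
Proof.
  unfold line_surv. rewrite (sum_lt_shift (S m)), line_hit_0.
  rewrite (sum_lt_ext (S m) _ (fun s => (line_hit s k + line_hit s (S (S k))) / 2)) by (intros; apply line_hit_S).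
  unfold Rdiv. rewrite sum_lt_scalr, sum_lt_plus. field.
Qed.

Lemma ret_eq_SS m : ret_eq n adj v0 (S (S m)) = line_hit (S m) 1 / 2 + kill_iter n adj v0 m (indic v0) v0 / 8.
Proof.
  unfold ret_eq.
  change (hit (S (S m)) (Lv 0)) with (rsum (map (fun y => / degG n adj v0 (Lv 0) *
     match y with Lv 0 => match S m with O => 1 | S _ => 0 end | _ => hit (S m) y end) [Lv 1; Hv v0])).
  unfold degG. cbn [nbrsG length]. replace (INR 2) with 2 by (simpl; ring).
  unfold rsum. cbn [map fold_right]. rewrite first_hit_Hv by auto. unfold line_hit. field.
Qed.

Lemma ret_eq_1 : ret_eq n adj v0 1 = 0.
Proof. unfold ret_eq. cbn [first_hit]. unfold rsum. simpl. ring. Qed.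

Hypothesis Hsym : forall i j, (i < n)%nat -> (j < n)%nat -> adj i j = adj j i.

Lemma ret_ge_SS m : ret_ge n adj v0 (S (S m)) = line_surv m 1 / 2 + wdot n v0 (fun _ => 1) (kill_iter n adj v0 m (indic v0)) / 8.
Proof.
  unfold ret_ge. replace (S (S m) - 1)%nat with (S m) by lia. rewrite rsum_map_seq1, sum_lt_shift, ret_eq_1.
  rewrite (sum_lt_ext m _ (fun j => line_hit (S j) 1 / 2 + kill_iter n adj v0 j (indic v0) v0 / 8)) by (intros; apply ret_eq_SS).
  rewrite (wdot_one_kill_iter n adj v0 Hsym Hdeg Hv0 m).
  unfold line_surv. rewrite sum_lt_shift, line_hit_0. unfold Rdiv. rewrite sum_lt_plus, !sum_lt_scalr. field.
Qed.

End Walk.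

(** * The return ratio for large [t] *)

Lemma first_hit_ge0 n adj v0 s x : 0 <= first_hit n adj v0 s x.
Proof.
  revert x. induction s; intros x; [simpl; lra|].
  cbn [first_hit]. generalize (nbrsG n adj v0 x). intros l.
  assert (Hd : 0 <= / degG n adj v0 x).
  { unfold degG. destruct (length (nbrsG n adj v0 x)); [simpl; rewrite Rinv_0; lra|].
    left. apply Rinv_0_lt_compat, lt_0_INR. lia. }
  induction l as [|y l IH]; unfold rsum; simpl; [lra|].
  unfold rsum in IH. apply Rplus_le_le_0_compat; auto. apply Rmult_le_pos; auto.
  destruct y as [[|k]|i]; try apply IHs. destruct s; lra.
Qed.

Lemma return_ratio_ge (c1 X E W a Ap h nR : R) :
  0 <= h -> 0 <= W -> W <= X -> c1 * X - E <= a -> Ap <= 8 * X + E * (3 * nR + 5) / 2 -> 4 * a <= Ap ->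
  E * (3 * nR + 5) / 16 <= X / 2 -> E <= c1 * X / 2 -> 0 < c1 -> 0 < X ->
  (h / 2 + a / 8) / (W / 2 + Ap / 8) >= c1 / 32.
Proof.
  intros. assert (Hden : 0 < W / 2 + Ap / 8) by (assert (0 < c1 * X) by (apply Rmult_lt_0_compat; auto); lra).
  apply Rle_ge. apply (Rmult_le_reg_r (W / 2 + Ap / 8)); auto.
  replace ((h / 2 + a / 8) / (W / 2 + Ap / 8) * (W / 2 + Ap / 8)) with (h / 2 + a / 8) by (field; lra).
  assert (c1 / 32 * (W / 2 + Ap / 8) <= c1 / 32 * (2 * X)) by (apply Rmult_le_compat_l; lra).
  lra.
Qed.

Definition gapr (r : R) := (1 - r) / 2.
Definition kapr (r : R) := / (3 * gapr r).
Definition kkr (r : R) := (1 + kapr r) * (1 + kapr r).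

Lemma kkr_ge1 r : r < 1 -> 1 <= kkr r.
Proof.
  intros Hr. assert (0 < kapr r) by (unfold kapr, gapr; apply Rinv_0_lt_compat; lra).
  unfold kkr. nra.
Qed.

Section ReturnRatio.
Variables (n : nat) (adj : nat -> nat -> bool) (v0 : nat) (rho : R).
Hypothesis Hcub : cubic_graph n adj.
Hypothesis Hv0 : (v0 < n)%nat.
Hypothesis Hrho : 0 <= rho < 1.
Hypothesis Hspec : nontrivial_spectrum_bound n adj rho.

Notation dl := (gapr rho).
Notation kap := (kapr rho).
Notation kk := (kkr rho).

(* [X] is any lower bound for [lam ^ m], [lam] the top eigenvalue of the killed walk on [H],
   that also dominates the half-line survival and the decay of the orthogonal part. *)
Lemma return_ratio_ge_inv_n (m : nat) (X : R) :
  / dl <= INR n -> 3 * (kap * kap) + 1 <= INR n -> 0 < X ->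
  (forall lam, 3 * INR n <= lam * (3 * INR n + 1) -> lam <= 1 -> X <= lam ^ m) ->
  line_surv n adj v0 m 1 <= X ->
  contr rho ^ Nat.div2 m <= X / (2 * kk * INR n) ->
  ret_eq n adj v0 (S (S m)) / ret_ge n adj v0 (S (S m)) >= / (32 * (INR n * kk)).
Proof.
  intros Hndl Hnk HX Hpow HW HE.
  destruct Hcub as [Hsym _]. assert (Hdeg := cubic_graph_deg n adj Hcub).
  assert (Hdl : 0 < dl) by (unfold gapr; lra).
  assert (Hkap : 0 < kap) by (unfold kapr; apply Rinv_0_lt_compat; lra).
  assert (Hkk := kkr_ge1 rho ltac:(lra)).
  assert (HnR : 1 <= INR n) by (assert (0 <= kap * kap) by apply Rle_0_sqr; lra).
  assert (Hn0 : (0 < n)%nat) by (apply INR_lt; simpl; lra).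
  assert (Hgap : (dl + rho) * (3 * INR n + 1) <= 3 * INR n).
  { assert (1 <= INR n * dl) by (apply (Rmult_le_compat_r dl) in Hndl; [rewrite Rinv_l in Hndl by lra|]; lra).
    replace (dl + rho) with (1 - dl) by (unfold gapr; field). nra. }
  destruct (kill_iter_bounds n adj v0 rho Hsym Hdeg Hv0 Hrho Hspec dl Hn0 Hdl Hgap) as [lam [Hlam1 [Hlam2 Hbounds]]].
  destruct (Hbounds m) as [Ha HA].
  rewrite (ret_eq_SS n adj v0 Hv0 Hdeg m), (ret_ge_SS n adj v0 Hv0 Hdeg Hsym m).
  assert (HXl := Hpow lam Hlam1 Hlam2).
  change (/ (3 * dl)) with kap in Ha. change ((1 + kap) * (1 + kap)) with kk in Ha.
  set (D := (3 * INR n + 3 * (kap * kap) + 1) * kk) in *.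
  assert (HD : D <= 4 * INR n * kk) by (unfold D; apply Rmult_le_compat_r; lra).
  assert (HD0 : 0 < D) by (unfold D; apply Rmult_lt_0_compat; nra).
  assert (Hc1 : / (INR n * kk) <= 4 / D).
  { apply (Rmult_le_reg_r D); auto. replace (4 / D * D) with 4 by (field; lra).
    apply (Rmult_le_reg_l (INR n * kk)); [nra|]. rewrite <- Rmult_assoc, Rinv_r by nra. nra. }
  assert (HE' : contr rho ^ Nat.div2 m <= lam ^ m / (2 * kk * INR n)).
  { eapply Rle_trans; [exact HE|]. apply Rmult_le_compat_r; [|lra].
    left. apply Rinv_0_lt_compat. nra. }
  eapply Rge_trans.
  - apply (return_ratio_ge (4 / D) (lam ^ m) (contr rho ^ Nat.div2 m) _ _ _ _ (INR n)); auto.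
    + apply first_hit_ge0.
    + apply (surv_ge0 (line_surv n adj v0) (line_surv_origin n adj v0) (line_surv_0 n adj v0) (line_surv_S n adj v0)).
    + lra.
    + apply kill_iter_root_le_mass; auto.
    + assert (lam ^ m / (2 * kk * INR n) * (3 * INR n + 5) <= 8 * lam ^ m).
      { apply (Rmult_le_reg_r (2 * kk * INR n)); [nra|].
        replace (lam ^ m / (2 * kk * INR n) * (3 * INR n + 5) * (2 * kk * INR n)) with (lam ^ m * (3 * INR n + 5)) by (field; nra).
        replace (8 * lam ^ m * (2 * kk * INR n)) with (lam ^ m * (16 * kk * INR n)) by ring.
        apply Rmult_le_compat_l; nra. }
      assert (contr rho ^ Nat.div2 m * (3 * INR n + 5) <= lam ^ m / (2 * kk * INR n) * (3 * INR n + 5))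
        by (apply Rmult_le_compat_r; lra).
      lra.
    + eapply Rle_trans; [exact HE'|].
      apply (Rmult_le_reg_r (2 * kk * INR n)); [nra|].
      replace (lam ^ m / (2 * kk * INR n) * (2 * kk * INR n)) with (lam ^ m) by (field; nra).
      replace (4 / D * lam ^ m / 2 * (2 * kk * INR n)) with (lam ^ m * (4 / D * (INR n * kk))) by (field; lra).
      assert (1 <= 4 / D * (INR n * kk)).
      { apply (Rmult_le_compat_r (INR n * kk)) in Hc1; [|nra]. rewrite Rinv_l in Hc1 by nra. lra. }
      assert (0 <= lam ^ m) by lra. nra.
    + apply Rmult_lt_0_compat; [lra|]. apply Rinv_0_lt_compat; lra.
    + lra.
  - apply Rle_ge. replace (/ (32 * (INR n * kk))) with (/ (INR n * kk) / 32) by (field; nra). lra.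
Qed.

End ReturnRatio.

Lemma exp_le_mono a b : a <= b -> exp a <= exp b.
Proof. intros H. destruct (Rle_lt_or_eq_dec a b H) as [H'|H']; [left; apply exp_increasing; auto|subst; lra]. Qed.

Lemma exp_INR_mul m z : exp (INR m * z) = exp z ^ m.
Proof.
  induction m; [simpl; rewrite Rmult_0_l, exp_0; reflexivity|].
  rewrite S_INR, Rmult_plus_distr_r, Rmult_1_l, exp_plus, IHm. simpl. ring.
Qed.

Lemma exp_m2x_le_1mx x : 0 <= x <= 1/2 -> exp (-2 * x) <= 1 - x.
Proof.
  intros H. replace (-2 * x) with (- (2 * x)) by ring. rewrite exp_Ropp.
  assert (H1 := exp_ineq1_le (2 * x)). assert (Hp := exp_pos (2 * x)).
  apply (Rmult_le_reg_l (exp (2 * x))); auto. rewrite Rinv_r by lra. nra.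
Qed.

Lemma exp_le_pow_of_gap (nR lam y : R) (m : nat) :
  1 <= nR -> 3 * nR <= lam * (3 * nR + 1) -> 12 * INR m <= y * (3 * nR + 1) ->
  exp (- (y / 6)) <= lam ^ m.
Proof.
  intros Hn Hlam Hm. set (x := / (3 * nR + 1)).
  assert (Hx : 0 <= x <= 1/2).
  { unfold x. split; [left; apply Rinv_0_lt_compat; lra|].
    apply (Rmult_le_reg_r (3 * nR + 1)); [lra|]. rewrite Rinv_l by lra. lra. }
  assert (Hl : 1 - x <= lam).
  { apply (Rmult_le_reg_r (3 * nR + 1)); [lra|].
    replace ((1 - x) * (3 * nR + 1)) with (3 * nR) by (unfold x; field; lra). lra. }
  assert (Hmx : - (y / 6) <= INR m * (-2 * x)).
  { apply (Rmult_le_reg_r (3 * nR + 1)); [lra|].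
    replace (INR m * (-2 * x) * (3 * nR + 1)) with (-2 * INR m) by (unfold x; field; lra). lra. }
  eapply Rle_trans; [apply exp_le_mono, Hmx|]. rewrite exp_INR_mul.
  eapply Rle_trans; [apply pow_incr; split; [left; apply exp_pos|apply exp_m2x_le_1mx; auto]|].
  apply pow_incr. lra.
Qed.

Lemma pow_ge_sq_of_cube (q C t : R) (k : nat) :
  1 < q -> 0 <= C -> 14 <= t -> t <= 2 * INR k + 3 -> 1728 * C <= t * (q - 1) ^ 3 ->
  C * (t * t) <= q ^ k.
Proof.
  intros Hq HC Ht Hk HqC.
  set (j := (k / 3)%nat).
  assert (Hj : (3 * j <= k <= 3 * j + 2)%nat).
  { unfold j. pose proof (Nat.div_mod k 3 ltac:(lia)). pose proof (Nat.mod_upper_bound k 3 ltac:(lia)). lia. }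
  assert (HjR : t / 12 <= INR j).
  { assert (INR k <= 3 * INR j + 2).
    { replace 3 with (INR 3) by (simpl; ring). replace 2 with (INR 2) by (simpl; ring).
      rewrite <- mult_INR, <- plus_INR. apply le_INR. lia. }
    lra. }
  assert (Hqk : (q ^ j) ^ 3 <= q ^ k) by (rewrite <- pow_mult, Nat.mul_comm; apply Rle_pow; lra || lia).
  assert (Hqj : t / 12 * (q - 1) <= q ^ j).
  { pose proof (poly j (q - 1) ltac:(lra)) as Hb. replace (1 + (q - 1)) with q in Hb by ring.
    assert (t / 12 * (q - 1) <= INR j * (q - 1)) by (apply Rmult_le_compat_r; lra). lra. }
  assert (Hcube : (t / 12 * (q - 1)) ^ 3 <= (q ^ j) ^ 3) by (apply pow_incr; split; [apply Rmult_le_pos; lra|auto]).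
  replace ((t / 12 * (q - 1)) ^ 3) with (t * t * (t * (q - 1) ^ 3) / 1728) in Hcube by (simpl; field).
  assert (C * (t * t) <= t * t * (t * (q - 1) ^ 3) / 1728).
  { assert (0 <= t * t) by nra. unfold Rdiv. nra. }
  lra.
Qed.

Lemma ln_regime (Y t nR : R) : 30 <= Y -> exp Y <= t ->
  4 * t / ln t <= nR <= 4 * t / ln t + 2 ->
  Y <= ln t /\ ln t <= nR /\ 4 * t <= ln t * nR /\ ln t * nR <= 8 * t /\ nR <= t.
Proof.
  intros HY Ht Hn.
  assert (Ht0 : 0 < t) by (pose proof (exp_pos Y); lra).
  set (y := ln t) in *.
  assert (Hy : Y <= y).
  { destruct (Rle_dec Y y) as [H|H]; auto. exfalso.
    assert (exp y < exp Y) by (apply exp_increasing; lra). unfold y in *. rewrite exp_ln in *; lra. }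
  assert (Hsq : (y / 2) * (y / 2) <= t).
  { rewrite <- (exp_ln t) by auto. fold y.
    replace (exp y) with (exp (y / 2) * exp (y / 2)) by (rewrite <- exp_plus; f_equal; field).
    assert (H := exp_ineq1_le (y / 2)). nra. }
  assert (H4 : y <= 4 * t / y).
  { apply (Rmult_le_reg_r y); [lra|]. replace (4 * t / y * y) with (4 * t) by (field; lra). nra. }
  assert (H8 : 4 * t / y + 2 <= 8 * t / y).
  { replace (8 * t / y) with (4 * t / y + 4 * t / y) by (field; lra). lra. }
  repeat split; [lra|lra| | |].
  - apply (Rmult_le_reg_r (/ y)); [apply Rinv_0_lt_compat; lra|].
    replace (y * nR * / y) with nR by (field; lra). unfold Rdiv in Hn. lra.
  - apply (Rmult_le_reg_r (/ y)); [apply Rinv_0_lt_compat; lra|].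
    replace (y * nR * / y) with nR by (field; lra). unfold Rdiv in H8. lra.
  - assert (8 * t / y <= t).
    { apply (Rmult_le_reg_r y); [lra|]. replace (8 * t / y * y) with (8 * t) by (field; lra). nra. }
    lra.
Qed.

Lemma root6_bounds t : 0 < t -> 30 <= ln t ->
  exp (ln t / 6) ^ 6 = t /\ 6 <= exp (ln t / 6) /\ exp (ln t / 6) <= t.
Proof.
  intros Ht Hy.
  assert (H6 : exp (ln t / 6) ^ 6 = t) by (rewrite <- exp_INR_mul; replace (INR 6 * (ln t / 6)) with (ln t) by (simpl; field); apply exp_ln; auto).
  assert (Hu : 6 <= exp (ln t / 6)) by (pose proof (exp_ineq1_le (ln t / 6)); lra).
  repeat split; auto. rewrite <- H6 at 2.
  assert (1 <= exp (ln t / 6) ^ 5) by (apply pow_R1_Rle; lra). simpl in *. nra.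
Qed.

(* The first term makes [ln t] exceed [30], [1 / gapr r] and [3 kapr^2 + 1], hence so does [n];
   the second makes [contr r ^ (t/2)] negligible against [t^(-1/6) / n]. *)
Definition t_min (r : R) :=
  exp (/ gapr r + 3 * (kapr r * kapr r) + 30) + 3456 * kkr r / (/ contr r - 1) ^ 3 + 14.

Lemma return_ratio_large_t r n adj v0 (t : nat) :
  1/2 <= r < 1 -> cubic_graph n adj -> (v0 < n)%nat -> nontrivial_spectrum_bound n adj r ->
  t_min r <= INR t -> 4 * INR t / ln (INR t) <= INR n <= 4 * INR t / ln (INR t) + 2 ->
  ret_eq n adj v0 t / ret_ge n adj v0 t >= / (256 * kkr r) * ln (INR t) / INR t.
Proof.
  intros Hr Hcub Hv0 Hspec Ht Hn.
  assert (Hdl : 0 < gapr r) by (unfold gapr; lra).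
  assert (Hkap : 0 < kapr r) by (unfold kapr; apply Rinv_0_lt_compat; lra).
  assert (Hkk := kkr_ge1 r ltac:(lra)).
  assert (Hq : 1 < / contr r).
  { unfold contr. rewrite Rinv_div. apply (Rmult_lt_reg_r r); [lra|]. unfold Rdiv. rewrite Rmult_assoc, Rinv_l by lra. lra. }
  assert (Hq3 : 0 < (/ contr r - 1) ^ 3) by (apply pow_lt; lra).
  assert (HT2 : 0 <= 3456 * kkr r / (/ contr r - 1) ^ 3) by (apply Rmult_le_pos; [lra|left; apply Rinv_0_lt_compat; lra]).
  assert (HY : 0 < / gapr r) by (apply Rinv_0_lt_compat; lra).
  assert (Hk2 : 0 <= kapr r * kapr r) by apply Rle_0_sqr.
  pose proof (exp_pos (/ gapr r + 3 * (kapr r * kapr r) + 30)).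
  unfold t_min in Ht. set (tR := INR t) in *. set (nR := INR n) in *.
  destruct (ln_regime (/ gapr r + 3 * (kapr r * kapr r) + 30) tR nR) as [Hy [HyN [H4 [H8 HnT]]]]; try lra.
  destruct (root6_bounds tR ltac:(lra) ltac:(lra)) as [Hu6 [Hu HuT]].
  set (y := ln tR) in *.
  set (u := exp (y / 6)) in *.
  assert (HX : exp (- (y / 6)) = / u) by (apply exp_Ropp).
  destruct t as [|[|m]]; [unfold tR in *; simpl in *; lra|unfold tR in *; simpl in *; lra|].
  assert (HmR : INR m = tR - 2) by (unfold tR; rewrite !S_INR; ring).
  eapply Rge_trans; [apply (return_ratio_ge_inv_n n adj v0 r Hcub Hv0 ltac:(lra) Hspec m (exp (- (y / 6))))|].
  - fold nR. lra.
  - fold nR. lra.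
  - apply exp_pos.
  - intros lam Hl1 _. fold nR in Hl1. apply (exp_le_pow_of_gap nR); [lra|auto|nra].
  - rewrite HX. apply half_line_surv_le; [apply line_surv_origin|apply line_surv_0|apply line_surv_S|lra|lra].
  - rewrite HX. fold nR.
    assert (Hpow := pow_ge_sq_of_cube (/ contr r) (2 * kkr r) tR (Nat.div2 m) Hq ltac:(lra) ltac:(lra)).
    assert (Hdiv : tR <= 2 * INR (Nat.div2 m) + 3).
    { assert (INR m <= 2 * INR (Nat.div2 m) + 1); [|lra].
      replace 2 with (INR 2) by (simpl; ring). replace 1 with (INR 1) by (simpl; ring).
      rewrite <- mult_INR, <- plus_INR. apply le_INR. pose proof (Nat.div2_odd m). destruct (Nat.odd m); simpl in *; lia. }
    assert (Hcube : 1728 * (2 * kkr r) <= tR * (/ contr r - 1) ^ 3).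
    { assert (Hd : 3456 * kkr r / (/ contr r - 1) ^ 3 <= tR) by lra.
      apply (Rmult_le_compat_r ((/ contr r - 1) ^ 3)) in Hd; [|lra].
      unfold Rdiv in Hd. rewrite Rmult_assoc, Rinv_l, Rmult_1_r in Hd by lra. lra. }
    specialize (Hpow Hdiv Hcube).
    assert (Hc0 : 0 < contr r) by (unfold contr; apply Rdiv_lt_0_compat; lra).
    rewrite <- (Rinv_inv (contr r)), pow_inv.
    assert (Hsq0 : 0 < 2 * kkr r * (tR * tR)) by (apply Rmult_lt_0_compat; nra).
    apply Rle_trans with (/ (2 * kkr r * (tR * tR))); [apply Rinv_le_contravar; auto|].
    apply (Rmult_le_reg_r (2 * kkr r * (tR * tR) * u)); [nra|].
    replace (/ (2 * kkr r * (tR * tR)) * (2 * kkr r * (tR * tR) * u)) with u by (field; nra).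
    replace (/ u / (2 * kkr r * nR) * (2 * kkr r * (tR * tR) * u)) with (tR * tR / nR) by (field; nra).
    apply (Rmult_le_reg_r nR); [lra|]. replace (tR * tR / nR * nR) with (tR * tR) by (field; lra).
    assert (u * nR <= tR * nR) by (apply Rmult_le_compat_r; lra). nra.
  - fold nR. apply Rle_ge.
    apply (Rmult_le_reg_r (256 * kkr r * tR)); [nra|].
    replace (/ (256 * kkr r) * y / tR * (256 * kkr r * tR)) with y by (field; nra).
    replace (/ (32 * (nR * kkr r)) * (256 * kkr r * tR)) with (8 * tR / nR) by (field; nra).
    apply (Rmult_le_reg_r nR); [lra|]. replace (8 * tR / nR * nR) with (8 * tR) by (field; lra). lra.
Qed.

Lemma nontrivial_spectrum_bound_mono n adj rho rho' :
  rho <= rho' -> nontrivial_spectrum_bound n adj rho -> nontrivial_spectrum_bound n adj rho'.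
Proof. intros Hr Hspec lam v Hnz Hs He. eapply Rle_trans; [apply (Hspec lam v Hnz Hs He)|exact Hr]. Qed.

Theorem theorem4p1 (rho : R) (hrho : rho < 1) :
  exists K c : R, 0 < K /\ 0 < c /\
  exists T : nat, forall (t n : nat) (adj : nat -> nat -> bool) (v0 : nat),
    (T <= t)%nat ->
    K * INR t / ln (INR t) <= INR n <= K * INR t / ln (INR t) + 2 ->
    cubic_graph n adj ->
    nontrivial_spectrum_bound n adj rho ->
    (v0 < n)%nat ->
    ret_eq n adj v0 t / ret_ge n adj v0 t >= c * ln (INR t) / INR t.
Proof.
  set (r := Rmax rho (1/2)).
  assert (Hr : 1/2 <= r < 1) by (split; [apply Rmax_r|apply Rmax_lub_lt; lra]).
  destruct (INR_archimed 1 (t_min r) ltac:(lra)) as [T HT].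
  exists 4, (/ (256 * kkr r)). split; [lra|]. split.
  { apply Rinv_0_lt_compat. pose proof (kkr_ge1 r ltac:(lra)). lra. }
  exists T. intros t n adj v0 Ht Hn Hcub Hspec Hv0.
  apply return_ratio_large_t; auto.
  - apply (nontrivial_spectrum_bound_mono n adj rho); [apply Rmax_l|auto].
  - apply le_INR in Ht. lra.
Qed.
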